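(* Let $(A,\phi)$ be a smooth solution of MKG on $\mathbb R^{1+4}$ with $\iota_TF=0$ and $\mathbf D_T\phi=0$, where $T=\partial_t$. If $\mathcal E_{\{0\}\times\mathbb R^4}[A,\phi]<\infty$, then $\mathcal E_{\{0\}\times\mathbb R^4}[A,\phi]=0$.
   Context: MKG on $\mathbb R^{1+4}$ (metric $\mathrm{diag}(-1,1,1,1,1)$): $\partial^\mu F_{\nu\mu}=\mathrm{Im}(\phi\overline{\mathbf D_\nu\phi})$, $\mathbf D^\mu\mathbf D_\mu\phi=0$, $A$ real 1-form, $\phi$ complex, $\mathbf D_\mu=\partial_\mu+iA_\mu$, $F_{\mu\nu}=\partial_\mu A_\nu-\partial_\nu A_\mu$; $\iota_TF=F(T,\cdot)$. $\mathcal E_S[A,\phi]=\frac12\int_S\sum_{0\le\mu<\nu\le4}|F_{\mu\nu}|^2+\sum_{\mu=0}^4|\mathbf D_\mu\phi|^2dx$. *)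

From Stdlib Require Import Reals List ClassicalEpsilon.
Open Scope R_scope.

(* Points of R^{1+4}: coordinates (t, x1, x2, x3, x4) = (x^0, ..., x^4). *)
Record P5 : Type := mkP { c0 : R; c1 : R; c2 : R; c3 : R; c4 : R }.

Definition coord (p : P5) (mu : nat) : R :=
  match mu with 0 => c0 p | 1 => c1 p | 2 => c2 p | 3 => c3 p | 4 => c4 p | _ => 0 end.

Definition upd (p : P5) (mu : nat) (s : R) : P5 :=
  match mu with
  | 0 => mkP s (c1 p) (c2 p) (c3 p) (c4 p)
  | 1 => mkP (c0 p) s (c2 p) (c3 p) (c4 p)
  | 2 => mkP (c0 p) (c1 p) s (c3 p) (c4 p)
  | 3 => mkP (c0 p) (c1 p) (c2 p) s (c4 p)
  | 4 => mkP (c0 p) (c1 p) (c2 p) (c3 p) s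
  | _ => p end.

Definition partial (mu : nat) (f : P5 -> R) (p : P5) : R :=
  epsilon (inhabits 0)
    (fun l => derivable_pt_lim (fun s => f (upd p mu s)) (coord p mu) l).

Definition iter_partial (l : list nat) (f : P5 -> R) : P5 -> R :=
  fold_right partial f l.

Definition continuous5 (f : P5 -> R) : Prop :=
  forall p eps, eps > 0 -> exists delta, delta > 0 /\
    forall q, (forall mu, (mu < 5)%nat -> Rabs (coord q mu - coord p mu) < delta) ->
      Rabs (f q - f p) < eps.

Definition smooth5 (f : P5 -> R) : Prop :=
  forall l : list nat, Forall (fun mu => (mu < 5)%nat) l ->
    continuous5 (iter_partial l f) /\
    forall mu, (mu < 5)%nat -> forall p, exists d,
      derivable_pt_lim (fun s => iter_partial l f (upd p mu s)) (coord p mu) d.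

(* A real 1-form: components A_mu, mu = 0..4.
   A complex scalar field: pair (Re phi, Im phi). *)
Definition Conn := nat -> P5 -> R.
Definition CField := P5 -> (R * R).

Definition eta (mu : nat) : R := match mu with 0 => -1 | _ => 1 end.

Definition Fcurv (A : Conn) (mu nu : nat) : P5 -> R :=
  fun p => partial mu (A nu) p - partial nu (A mu) p.

(* D_mu psi = d_mu psi + i A_mu psi *)
Definition Dcov (A : Conn) (psi : CField) (mu : nat) : CField :=
  fun p => (partial mu (fun q => fst (psi q)) p - A mu p * snd (psi p),
            partial mu (fun q => snd (psi q)) p + A mu p * fst (psi p)).

(* Im(phi * conj(D_nu phi)) *)
Definition Jcur (A : Conn) (phi : CField) (nu : nat) (p : P5) : R :=
  snd (phi p) * fst (Dcov A phi nu p) - fst (phi p) * snd (Dcov A phi nu p).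

Definition is_MKG (A : Conn) (phi : CField) : Prop :=
  (forall nu, (nu < 5)%nat -> forall p,
     sum_f_R0 (fun mu => eta mu * partial mu (Fcurv A nu mu) p) 4 = Jcur A phi nu p)
  /\ (forall p,
     sum_f_R0 (fun mu => eta mu * fst (Dcov A (Dcov A phi mu) mu p)) 4 = 0 /\
     sum_f_R0 (fun mu => eta mu * snd (Dcov A (Dcov A phi mu) mu p)) 4 = 0).

Definition smooth_sol (A : Conn) (phi : CField) : Prop :=
  (forall mu, (mu < 5)%nat -> smooth5 (A mu)) /\
  smooth5 (fun q => fst (phi q)) /\ smooth5 (fun q => snd (phi q)).

Definition edens (A : Conn) (phi : CField) (x1 x2 x3 x4 : R) : R :=
  let p := mkP 0 x1 x2 x3 x4 in
  / 2 * (sum_f_R0 (fun mu => sum_f_R0 (fun nu =>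
            if Nat.ltb mu nu then (Fcurv A mu nu p) ^ 2 else 0) 4) 4
         + sum_f_R0 (fun mu => (fst (Dcov A phi mu p)) ^ 2
                               + (snd (Dcov A phi mu p)) ^ 2) 4).

Definition riemann4 (g : R -> R -> R -> R -> R) (Rb : R) (n : nat) : R :=
  let h := 2 * Rb / INR (S n) in
  let m := fun i : nat => - Rb + (INR i + / 2) * h in
  sum_f_R0 (fun i1 => sum_f_R0 (fun i2 => sum_f_R0 (fun i3 => sum_f_R0 (fun i4 =>
     g (m i1) (m i2) (m i3) (m i4) * h ^ 4) n) n) n) n.

Definition cube_integral (g : R -> R -> R -> R -> R) (Rb I : R) : Prop :=
  Un_cv (riemann4 g Rb) I.

(* E is the (finite) value of int_{R^4} g = sup over cubes (g >= 0, continuous) *)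
Definition integral_R4_is (g : R -> R -> R -> R -> R) (E : R) : Prop :=
  is_lub (fun I => exists Rb, Rb > 0 /\ cube_integral g Rb I) E.

Definition energy0_is (A : Conn) (phi : CField) (E : R) : Prop :=
  integral_R4_is (edens A phi) E.

From Stdlib Require Import Reals Lra Lia List ClassicalEpsilon FunctionalExtensionality Classical.
From Coquelicot Require Coquelicot.
Open Scope R_scope.

(* Staticity (iota_T F = 0, D_T phi = 0) reduces MKG on the slice {t = 0} to the elliptic system
   d^k F_jk = J_j, D^k D_k phi = 0 on R^4.  Contracting the spatial stress tensor T_jk with the
   position vector gives the Pohozaev identity d^j (T_jk x^k) = T_jj = -|D phi|^2: in dimension four
   the |F|^2 terms cancel.  Integrated against a cutoff chi_a which is 1 for |x| <= a, 0 for
   |x| >= a^2 and satisfies |x| |grad chi_a| <= C / ln a, it bounds the integral of chi_a |D phi|^2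
   by C / ln a times the energy; letting a grow gives D phi = 0, hence J = 0.  Then every F_jk is
   harmonic on the slice, and the Caccioppoli inequality with the same cutoff gives grad F = 0, so
   F is constant and, having finite energy, zero.  Integrals are handled through the Riemann sums
   of the definitions: Riemann sums of divergences of compactly supported C^1 fields tend to 0. *)

Definition is_partial (mu : nat) (f : P5 -> R) (p : P5) (l : R) : Prop :=
  derivable_pt_lim (fun s => f (upd p mu s)) (coord p mu) l.

Lemma partial_of_is_partial mu f p l : is_partial mu f p l -> partial mu f p = l.
Proof.
  intro H. unfold partial.
  assert (Hs := epsilon_spec (inhabits 0)
    (fun l => derivable_pt_lim (fun s => f (upd p mu s)) (coord p mu) l)
    (ex_intro _ l H)).
  eapply uniqueness_limite; eauto.
Qed.

Lemma upd_coord p mu : (mu < 5)%nat -> upd p mu (coord p mu) = p.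
Proof. intro. destruct p; destruct mu as [|[|[|[|[|]]]]]; simpl; auto; lia. Qed.
Lemma coord_upd p mu s : (mu < 5)%nat -> coord (upd p mu s) mu = s.
Proof. intro. destruct p; destruct mu as [|[|[|[|[|]]]]]; simpl; auto; lia. Qed.
Lemma upd_upd p mu s t : upd (upd p mu s) mu t = upd p mu t.
Proof. destruct p; destruct mu as [|[|[|[|[|]]]]]; simpl; auto. Qed.
Lemma coord_upd_other p mu nu s : mu <> nu -> coord (upd p mu s) nu = coord p nu.
Proof. intro. destruct p; destruct mu as [|[|[|[|[|]]]]]; destruct nu as [|[|[|[|[|]]]]]; simpl; auto; lia. Qed.

Definition continuous5_at (f : P5 -> R) (p : P5) : Prop :=
  forall eps, eps > 0 -> exists delta, delta > 0 /\
    forall q, (forall mu, (mu < 5)%nat -> Rabs (coord q mu - coord p mu) < delta) ->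
      Rabs (f q - f p) < eps.

Lemma continuous5_pointwise f : continuous5 f <-> forall p, continuous5_at f p.
Proof. split; intros H p; [intro; apply H | apply H]. Qed.

Lemma continuous5_at_const c p : continuous5_at (fun _ => c) p.
Proof. intros e He. exists 1; split; [lra|]. intros. rewrite Rminus_diag, Rabs_R0; lra. Qed.

Lemma close_Rmin q p d1 d2 :
  (forall mu, (mu < 5)%nat -> Rabs (coord q mu - coord p mu) < Rmin d1 d2) ->
  (forall mu, (mu < 5)%nat -> Rabs (coord q mu - coord p mu) < d1) /\
  (forall mu, (mu < 5)%nat -> Rabs (coord q mu - coord p mu) < d2).
Proof.
  intro H; split; intros mu Hmu; specialize (H mu Hmu);
  [apply Rlt_le_trans with (1:=H); apply Rmin_l | apply Rlt_le_trans with (1:=H); apply Rmin_r].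
Qed.

Lemma continuous5_at_plus f g p : continuous5_at f p -> continuous5_at g p -> continuous5_at (fun q => f q + g q) p.
Proof.
  intros Hf Hg e He.
  destruct (Hf (e/2)) as [d1 [Hd1 H1]]; [lra|].
  destruct (Hg (e/2)) as [d2 [Hd2 H2]]; [lra|].
  exists (Rmin d1 d2); split; [apply Rmin_pos; auto|].
  intros q Hq. destruct (close_Rmin _ _ _ _ Hq) as [Q1 Q2].
  specialize (H1 q Q1); specialize (H2 q Q2).
  replace (f q + g q - (f p + g p)) with ((f q - f p) + (g q - g p)) by ring.
  eapply Rle_lt_trans; [apply Rabs_triang|]. lra.
Qed.

Lemma continuous5_at_opp f p : continuous5_at f p -> continuous5_at (fun q => - f q) p.
Proof.
  intros Hf e He. destruct (Hf e He) as [d [Hd H]]. exists d; split; auto.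
  intros q Hq. replace (- f q - - f p) with (- (f q - f p)) by ring.
  rewrite Rabs_Ropp. auto.
Qed.

Lemma continuous5_at_mult f g p : continuous5_at f p -> continuous5_at g p -> continuous5_at (fun q => f q * g q) p.
Proof.
  intros Hf Hg e He.
  set (a := Rabs (f p)). set (b := Rabs (g p)).
  assert (Ha : 0 <= a) by apply Rabs_pos. assert (Hb : 0 <= b) by apply Rabs_pos.
  set (e1 := Rmin 1 (e / (2 + a + b))).
  assert (He1 : 0 < e1). { apply Rmin_pos; [lra|]. apply Rdiv_lt_0_compat; lra. }
  assert (He1a : e1 <= 1) by apply Rmin_l.
  assert (He1b : e1 * (2 + a + b) <= e).
  { apply Rle_trans with (e / (2 + a + b) * (2 + a + b)).
    apply Rmult_le_compat_r; [lra| apply Rmin_r]. right; field; lra. }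
  destruct (Hf e1 He1) as [d1 [Hd1 H1]].
  destruct (Hg e1 He1) as [d2 [Hd2 H2]].
  exists (Rmin d1 d2); split; [apply Rmin_pos; auto|].
  intros q Hq. destruct (close_Rmin _ _ _ _ Hq) as [Q1 Q2].
  specialize (H1 q Q1); specialize (H2 q Q2).
  replace (f q * g q - f p * g p) with
    ((f q - f p) * (g q - g p) + f p * (g q - g p) + g p * (f q - f p)) by ring.
  eapply Rle_lt_trans; [apply Rabs_triang|].
  eapply Rle_lt_trans; [apply Rplus_le_compat_r; apply Rabs_triang|].
  rewrite !Rabs_mult. fold a b.
  set (x := Rabs (f q - f p)) in *. set (y := Rabs (g q - g p)) in *.
  assert (0 <= x) by apply Rabs_pos. assert (0 <= y) by apply Rabs_pos.
  assert (x * y <= e1 * 1) by (apply Rmult_le_compat; lra).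
  assert (a * y <= a * e1) by (apply Rmult_le_compat_l; lra).
  assert (b * x <= b * e1) by (apply Rmult_le_compat_l; lra).
  nra.
Qed.

Lemma continuous5_at_comp (h : R -> R) f p : continuity_pt h (f p) -> continuous5_at f p ->
  continuous5_at (fun q => h (f q)) p.
Proof.
  intros Hh Hf e He.
  destruct (Hh e He) as [d1 [Hd1 H1]].
  destruct (Hf d1 Hd1) as [d [Hd H]].
  exists d; split; auto. intros q Hq.
  destruct (Req_dec (f q) (f p)) as [E|E].
  - rewrite E, Rminus_diag, Rabs_R0; lra.
  - apply (H1 (f q)). split. split. exact I. intro E2; apply E; symmetry; exact E2. simpl. unfold R_dist. apply H; auto.
Qed.

Lemma continuous5_at_coord k p : continuous5_at (fun q => coord q k) p.
Proof.
  intros e He. exists e; split; auto. intros q Hq.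
  destruct (Nat.lt_ge_cases k 5) as [Hk|Hk]; [apply Hq; auto|].
  destruct k as [|[|[|[|[|]]]]]; try lia. simpl. rewrite Rminus_diag, Rabs_R0; lra.
Qed.

Fixpoint Ck (k : nat) (f : P5 -> R) : Prop :=
  match k with
  | O => continuous5 f
  | S k => continuous5 f /\ (forall mu, (mu < 5)%nat -> forall p, exists l, is_partial mu f p l)
           /\ (forall mu, (mu < 5)%nat -> Ck k (partial mu f))
  end.

Lemma Ck_continuous k f : Ck k f -> continuous5 f.
Proof. destruct k; simpl; tauto. Qed.

Lemma Ck_S k f : Ck (S k) f -> Ck k f.
Proof.
  revert f; induction k; intros f H.
  - apply (Ck_continuous 1). exact H.
  - destruct H as [H1 [H2 H3]]. split; [exact H1|split; [exact H2|]].
    intros mu Hmu. apply IHk. apply H3; auto.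
Qed.

Lemma Ck_is_partial k f mu p : Ck (S k) f -> (mu < 5)%nat -> is_partial mu f p (partial mu f p).
Proof.
  intros [_ [H _]] Hmu. destruct (H mu Hmu p) as [l Hl].
  rewrite (partial_of_is_partial _ _ _ _ Hl). exact Hl.
Qed.

Lemma Ck_partial k f mu : Ck (S k) f -> (mu < 5)%nat -> Ck k (partial mu f).
Proof. intros [_ [_ H]] Hmu; auto. Qed.

Lemma smooth5_Ck_iter f : smooth5 f -> forall k l, Forall (fun mu => (mu < 5)%nat) l ->
  Ck k (iter_partial l f).
Proof.
  intros Hs k. induction k; intros l Hl.
  - apply (Hs l Hl).
  - destruct (Hs l Hl) as [Hc Hd]. split; [auto|split].
    + intros mu Hmu p. apply Hd; auto.
    + intros mu Hmu. apply (IHk (mu :: l)). constructor; auto.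
Qed.

Lemma smooth5_Ck f k : smooth5 f -> Ck k f.
Proof. intro H. apply (smooth5_Ck_iter f H k nil). constructor. Qed.

Lemma Ck_const k : forall c, Ck k (fun _ => c).
Proof.
  induction k; intro c.
  - simpl. intros p. apply continuous5_at_const.
  - split; [intro p; apply continuous5_at_const|split].
    + intros mu Hmu p. exists 0. unfold is_partial. apply derivable_pt_lim_const.
    + intros mu Hmu. replace (partial mu (fun _ => c)) with (fun _ : P5 => 0); [apply IHk|].
      apply functional_extensionality; intro p. symmetry. apply partial_of_is_partial. unfold is_partial. apply derivable_pt_lim_const.
Qed.

(* Polynomials in finitely many smooth functions, so that sums, products and derivatives of
   field expressions are computed by structural recursion ([dexpr] is the Leibniz rule). *)
Inductive expr : Type :=
| EF (f : P5 -> R) | EC (c : R) | EAdd (a b : expr) | EMul (a b : expr) | EOpp (a : expr).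

Fixpoint eval_expr (e : expr) (q : P5) : R :=
  match e with
  | EF f => f q | EC c => c | EAdd a b => eval_expr a q + eval_expr b q
  | EMul a b => eval_expr a q * eval_expr b q | EOpp a => - eval_expr a q end.

Fixpoint dexpr (mu : nat) (e : expr) : expr :=
  match e with
  | EF f => EF (partial mu f) | EC c => EC 0 | EAdd a b => EAdd (dexpr mu a) (dexpr mu b)
  | EMul a b => EAdd (EMul (dexpr mu a) b) (EMul a (dexpr mu b)) | EOpp a => EOpp (dexpr mu a) end.

Fixpoint all_atoms (P : (P5 -> R) -> Prop) (e : expr) : Prop :=
  match e with
  | EF f => P f | EC _ => True | EAdd a b | EMul a b => all_atoms P a /\ all_atoms P b
  | EOpp a => all_atoms P a end.

Lemma all_atoms_impl (P Q : (P5 -> R) -> Prop) e : (forall f, P f -> Q f) -> all_atoms P e -> all_atoms Q e.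
Proof. intro H; induction e; simpl; intuition. Qed.

Lemma all_atoms_dexpr (P Q : (P5 -> R) -> Prop) mu e :
  (forall f, P f -> Q f) -> (forall f, P f -> Q (partial mu f)) -> all_atoms P e -> all_atoms Q (dexpr mu e).
Proof.
  intros H1 H2; induction e; simpl; intuition; eapply all_atoms_impl; eauto.
Qed.

Lemma is_partial_eval_expr mu p e : (mu < 5)%nat -> all_atoms (fun f => exists l, is_partial mu f p l) e ->
  is_partial mu (eval_expr e) p (eval_expr (dexpr mu e) p).
Proof.
  intro Hmu. induction e; simpl; intro H.
  - destruct H as [l Hl]. rewrite (partial_of_is_partial _ _ _ _ Hl). exact Hl.
  - unfold is_partial. apply derivable_pt_lim_const.
  - destruct H as [Ha Hb]. unfold is_partial in *.
    apply (derivable_pt_lim_plus (fun s => eval_expr e1 (upd p mu s)) (fun s => eval_expr e2 (upd p mu s))); auto.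
  - destruct H as [Ha Hb]. unfold is_partial in *.
    pose proof (derivable_pt_lim_mult (fun s => eval_expr e1 (upd p mu s)) (fun s => eval_expr e2 (upd p mu s)) _ _ _ (IHe1 Ha) (IHe2 Hb)) as HH.
    cbv beta in HH; rewrite upd_coord in HH by auto.
    eapply derivable_pt_lim_ext; [|exact HH]. intro; reflexivity.
  - unfold is_partial in *.
    apply (derivable_pt_lim_opp (fun s => eval_expr e (upd p mu s))); auto.
Qed.

Lemma partial_eval_expr mu p e : (mu < 5)%nat -> all_atoms (fun f => exists l, is_partial mu f p l) e ->
  partial mu (eval_expr e) p = eval_expr (dexpr mu e) p.
Proof. intros. apply partial_of_is_partial, is_partial_eval_expr; auto. Qed.

Lemma eval_expr_continuous e : all_atoms continuous5 e -> continuous5 (eval_expr e).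
Proof.
  induction e; simpl; intros H; apply continuous5_pointwise; intro p.
  - apply continuous5_pointwise; exact H.
  - apply continuous5_at_const.
  - destruct H. apply continuous5_at_plus; [apply continuous5_pointwise, IHe1|apply continuous5_pointwise, IHe2]; auto.
  - destruct H. apply continuous5_at_mult; [apply continuous5_pointwise, IHe1|apply continuous5_pointwise, IHe2]; auto.
  - apply continuous5_at_opp; apply continuous5_pointwise, IHe; auto.
Qed.

Lemma eval_expr_Ck k e : all_atoms (Ck k) e -> Ck k (eval_expr e).
Proof.
  revert e; induction k; intros e H.
  - apply eval_expr_continuous; auto.
  - split; [|split].
    + apply eval_expr_continuous. eapply all_atoms_impl; [|exact H]. apply Ck_continuous.
    + intros mu Hmu p. eexists. apply is_partial_eval_expr; auto.
      eapply all_atoms_impl; [|exact H]. intros f Hf. eexists; eapply Ck_is_partial; eauto.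
    + intros mu Hmu.
      replace (partial mu (eval_expr e)) with (eval_expr (dexpr mu e)).
      * apply IHk. eapply all_atoms_dexpr; [| |exact H].
        -- apply Ck_S.
        -- intros f Hf; apply Ck_partial; auto.
      * apply functional_extensionality; intro p. symmetry. apply partial_eval_expr; auto.
        eapply all_atoms_impl; [|exact H]. intros f Hf. eexists; eapply Ck_is_partial; eauto.
Qed.

(** * Symmetry of second derivatives *)

Module SchwarzTheorem.
Import Coquelicot.Coquelicot.

Lemma upd_comm p i j u v : i <> j -> upd (upd p i u) j v = upd (upd p j v) i u.
Proof. intro. destruct p; destruct i as [|[|[|[|[|]]]]]; destruct j as [|[|[|[|[|]]]]]; simpl; auto; lia. Qed.

Lemma Derive_upd k f r mu s0 : (mu < 5)%nat -> Ck (S k) f ->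
  Derive (fun s => f (upd r mu s)) s0 = partial mu f (upd r mu s0).
Proof.
  intros Hmu Hf. apply is_derive_unique. apply is_derive_Reals.
  pose proof (Ck_is_partial k f mu (upd r mu s0) Hf Hmu) as H. unfold is_partial in H.
  rewrite coord_upd in H by auto.
  eapply derivable_pt_lim_ext; [|exact H]. intro z; simpl. rewrite upd_upd; auto.
Qed.

Lemma ex_derive_upd k f r mu s0 : (mu < 5)%nat -> Ck (S k) f ->
  ex_derive (fun s => f (upd r mu s)) s0.
Proof.
  intros Hmu Hf. exists (partial mu f (upd r mu s0)). apply is_derive_Reals.
  pose proof (Ck_is_partial k f mu (upd r mu s0) Hf Hmu) as H. unfold is_partial in H.
  rewrite coord_upd in H by auto.
  eapply derivable_pt_lim_ext; [|exact H]. intro z; simpl. rewrite upd_upd; auto.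
Qed.

Lemma coord_upd_upd_close p i j u v mu : i <> j -> (i < 5)%nat -> (j < 5)%nat ->
  Rabs (coord (upd (upd p i u) j v) mu - coord p mu) <= Rmax (Rabs (u - coord p i)) (Rabs (v - coord p j)).
Proof.
  intros Hij Hi Hj.
  destruct (Nat.eq_dec mu j) as [->|Hmj].
  - rewrite coord_upd by auto. apply Rmax_r.
  - rewrite coord_upd_other by auto.
    destruct (Nat.eq_dec mu i) as [->|Hmi].
    + rewrite coord_upd by auto. apply Rmax_l.
    + rewrite coord_upd_other by auto. rewrite Rminus_diag, Rabs_R0.
      apply Rle_trans with (Rabs (u - coord p i)); [apply Rabs_pos|apply Rmax_l].
Qed.

Lemma continuity_2d_upd (h : P5 -> R) p i j : i <> j -> (i < 5)%nat -> (j < 5)%nat -> continuous5 h ->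
  continuity_2d_pt (fun u v => h (upd (upd p i u) j v)) (coord p i) (coord p j).
Proof.
  intros Hij Hi Hj Hh eps.
  destruct (Hh (upd (upd p i (coord p i)) j (coord p j)) eps (cond_pos eps)) as [d [Hd H]].
  exists (mkposreal d Hd). intros u v Hu Hv. simpl in Hu, Hv.
  apply H. intros mu Hmu.
  rewrite (upd_coord p i Hi).
  rewrite (upd_coord p j Hj).
  eapply Rle_lt_trans; [apply coord_upd_upd_close; auto|].
  apply Rmax_lub_lt; auto.
Qed.

Lemma Ck_partial_comm k f i j p : (i < 5)%nat -> (j < 5)%nat -> Ck (S (S k)) f ->
  partial i (partial j f) p = partial j (partial i f) p.
Proof.
  intros Hi Hj Hf.
  destruct (Nat.eq_dec i j) as [->|Hij]; [reflexivity|].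
  set (g := fun u v => f (upd (upd p i u) j v)).
  assert (Hf1 : Ck (S k) (partial j f)) by (apply Ck_partial; auto).
  assert (Hf2 : Ck (S k) (partial i f)) by (apply Ck_partial; auto).
  assert (E1 : forall z y, Derive (fun t => g z t) y = partial j f (upd (upd p i z) j y)).
  { intros z y. unfold g. apply (Derive_upd (S k)); auto. }
  assert (E2 : forall z y, Derive (fun t => g t z) y = partial i f (upd (upd p j z) i y)).
  { intros z y. unfold g.
    rewrite (Derive_ext (fun t => f (upd (upd p i t) j z)) (fun t => f (upd (upd p j z) i t))).
    apply (Derive_upd (S k)); auto. intro t. rewrite upd_comm; auto. }
  pose proof (Schwarz g (coord p i) (coord p j)) as HS.
  assert (L1 : forall u v, Derive (fun z => Derive (fun t => g z t) v) u = partial i (partial j f) (upd (upd p i u) j v)).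
  { intros u v. rewrite (Derive_ext _ (fun z => partial j f (upd (upd p j v) i z))).
    rewrite (Derive_upd k); auto. rewrite upd_comm; auto.
    intro z. rewrite E1, upd_comm; auto. }
  assert (L2 : forall u v, Derive (fun z => Derive (fun t => g t z) u) v = partial j (partial i f) (upd (upd p i u) j v)).
  { intros u v. rewrite (Derive_ext _ (fun z => partial i f (upd (upd p j z) i u))).
    2:{ intro z. rewrite E2. reflexivity. }
    rewrite (Derive_ext _ (fun z => partial i f (upd (upd p i u) j z))).
    2:{ intro z. rewrite upd_comm; auto. }
    apply (Derive_upd k); auto. }
  rewrite L1, L2 in HS.
  rewrite (upd_coord p i Hi), (upd_coord p j Hj) in HS.
  apply HS.
  - exists (mkposreal 1 Rlt_0_1). intros u v _ _. split; [|split; [|split]].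
    + unfold g. apply (ex_derive_ext (fun z => f (upd (upd p j v) i z))).
      { intro z. rewrite upd_comm; auto. } apply (ex_derive_upd (S k)); auto.
    + unfold g. apply (ex_derive_upd (S k)); auto.
    + apply (ex_derive_ext (fun z => partial j f (upd (upd p j v) i z))).
      { intro z. rewrite E1, upd_comm; auto. } apply (ex_derive_upd k); auto.
    + apply (ex_derive_ext (fun z => partial i f (upd (upd p i u) j z))).
      { intro z. rewrite E2, upd_comm; auto. } apply (ex_derive_upd k); auto.
  - replace (fun u v => Derive (fun z => Derive (fun t => g z t) v) u) with
      (fun u v => partial i (partial j f) (upd (upd p i u) j v)).
    apply continuity_2d_upd; auto. apply (Ck_continuous k). apply Ck_partial; auto.
    do 2 (apply functional_extensionality; intro). rewrite L1; auto.
  - replace (fun u v => Derive (fun z => Derive (fun t => g t z) u) v) with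
      (fun u v => partial j (partial i f) (upd (upd p i u) j v)).
    apply continuity_2d_upd; auto. apply (Ck_continuous k). apply Ck_partial; auto.
    do 2 (apply functional_extensionality; intro). rewrite L2; auto.
Qed.

End SchwarzTheorem.
Import SchwarzTheorem.

Definition Cinf (f : P5 -> R) : Prop := forall k, Ck k f.

Lemma Cinf_partial f mu : (mu < 5)%nat -> Cinf f -> Cinf (partial mu f).
Proof. intros Hmu H k. apply Ck_partial; [apply H | exact Hmu]. Qed.

Lemma Cinf_eval_expr e : all_atoms Cinf e -> Cinf (eval_expr e).
Proof. intros H k. apply eval_expr_Ck. eapply all_atoms_impl; [|exact H]. auto. Qed.

Lemma partial_eval_expr_Cinf mu p e : (mu < 5)%nat -> all_atoms Cinf e ->
  partial mu (eval_expr e) p = eval_expr (dexpr mu e) p.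
Proof.
  intros Hmu H. apply partial_eval_expr; auto. eapply all_atoms_impl; [|exact H].
  intros f Hf. exists (partial mu f p). apply (Ck_is_partial 0); [apply Hf|auto].
Qed.

Lemma Cinf_partial_comm f i j p : (i < 5)%nat -> (j < 5)%nat -> Cinf f ->
  partial i (partial j f) p = partial j (partial i f) p.
Proof. intros Hi Hj Hf. apply (Ck_partial_comm 0); auto. Qed.

Definition phi_re (phi : CField) : P5 -> R := fun q => fst (phi q).
Definition phi_im (phi : CField) : P5 -> R := fun q => snd (phi q).
Definition Dre (A : Conn) (phi : CField) (j : nat) : P5 -> R := fun q => fst (Dcov A phi j q).
Definition Dim (A : Conn) (phi : CField) (j : nat) : P5 -> R := fun q => snd (Dcov A phi j q).

Definition Cinf_sol (A : Conn) (phi : CField) : Prop :=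
  (forall mu, (mu < 5)%nat -> Cinf (A mu)) /\ Cinf (phi_re phi) /\ Cinf (phi_im phi).

Lemma Cinf_sol_of_smooth_sol A phi : smooth_sol A phi -> Cinf_sol A phi.
Proof.
  intros [H1 [H2 H3]]. split; [|split].
  - intros mu Hmu k. apply smooth5_Ck; auto.
  - intro k. apply smooth5_Ck; auto.
  - intro k. apply smooth5_Ck; auto.
Qed.

Definition expr_Dre A phi j := EAdd (EF (partial j (phi_re phi))) (EOpp (EMul (EF (A j)) (EF (phi_im phi)))).
Definition expr_Dim A phi j := EAdd (EF (partial j (phi_im phi))) (EMul (EF (A j)) (EF (phi_re phi))).
Definition expr_F (A : Conn) j k := EAdd (EF (partial j (A k))) (EOpp (EF (partial k (A j)))).

Lemma Dre_expr A phi j : Dre A phi j = eval_expr (expr_Dre A phi j).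
Proof. apply functional_extensionality; intro q. unfold Dre, Dcov, expr_Dre, phi_re, phi_im; simpl. ring. Qed.
Lemma Dim_expr A phi j : Dim A phi j = eval_expr (expr_Dim A phi j).
Proof. apply functional_extensionality; intro q. unfold Dim, Dcov, expr_Dim, phi_re, phi_im; simpl. ring. Qed.
Lemma Fcurv_expr A j k : Fcurv A j k = eval_expr (expr_F A j k).
Proof. apply functional_extensionality; intro q. unfold Fcurv, expr_F; simpl. ring. Qed.

Ltac Cinf_tac :=
  repeat match goal with
  | |- all_atoms _ _ => simpl
  | |- _ /\ _ => split
  | |- True => exact I
  | |- Cinf (partial _ _) => apply Cinf_partial; [lia|]
  | H : Cinf_sol _ _ |- Cinf (phi_re _) => apply (proj1 (proj2 H))
  | H : Cinf_sol _ _ |- Cinf (phi_im _) => apply (proj2 (proj2 H))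
  | H : Cinf_sol ?A _ |- Cinf (?A _) => apply (proj1 H); lia
  | |- Cinf (eval_expr _) => apply Cinf_eval_expr
  end.

Lemma Cinf_Dre A phi j : Cinf_sol A phi -> (j < 5)%nat -> Cinf (Dre A phi j).
Proof. intros. rewrite Dre_expr. Cinf_tac. Qed.
Lemma Cinf_Dim A phi j : Cinf_sol A phi -> (j < 5)%nat -> Cinf (Dim A phi j).
Proof. intros. rewrite Dim_expr. Cinf_tac. Qed.
Lemma Cinf_Fcurv A phi j k : Cinf_sol A phi -> (j < 5)%nat -> (k < 5)%nat -> Cinf (Fcurv A j k).
Proof. intros. rewrite Fcurv_expr. Cinf_tac. Qed.

Lemma partial_Dre_comm A phi j k p : Cinf_sol A phi -> (j < 5)%nat -> (k < 5)%nat ->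
  partial j (Dre A phi k) p = partial k (Dre A phi j) p
    - Fcurv A j k p * phi_im phi p + A j p * Dim A phi k p - A k p * Dim A phi j p.
Proof.
  intros HS Hj Hk. rewrite !Dre_expr.
  rewrite !partial_eval_expr_Cinf by (auto; Cinf_tac). simpl.
  rewrite (Cinf_partial_comm (phi_re phi) j k) by (auto; Cinf_tac).
  unfold Dim, Dcov, Fcurv, phi_re, phi_im; simpl. ring.
Qed.

Lemma partial_Dim_comm A phi j k p : Cinf_sol A phi -> (j < 5)%nat -> (k < 5)%nat ->
  partial j (Dim A phi k) p = partial k (Dim A phi j) p
    + Fcurv A j k p * phi_re phi p - A j p * Dre A phi k p + A k p * Dre A phi j p.
Proof.
  intros HS Hj Hk. rewrite !Dim_expr.
  rewrite !partial_eval_expr_Cinf by (auto; Cinf_tac). simpl.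
  rewrite (Cinf_partial_comm (phi_im phi) j k) by (auto; Cinf_tac).
  unfold Dre, Dcov, Fcurv, phi_re, phi_im; simpl. ring.
Qed.

Lemma bianchi A phi i j k p : Cinf_sol A phi -> (i < 5)%nat -> (j < 5)%nat -> (k < 5)%nat ->
  partial i (Fcurv A j k) p + partial j (Fcurv A k i) p + partial k (Fcurv A i j) p = 0.
Proof.
  intros HS Hi Hj Hk. rewrite !Fcurv_expr.
  rewrite !partial_eval_expr_Cinf by (auto; Cinf_tac). simpl.
  rewrite (Cinf_partial_comm (A k) i j), (Cinf_partial_comm (A i) j k), (Cinf_partial_comm (A j) i k) by (auto; Cinf_tac).
  ring.
Qed.

Lemma Fcurv_antisym_fun A j k : Fcurv A k j = fun q => - Fcurv A j k q.
Proof. apply functional_extensionality; intro q. unfold Fcurv; ring. Qed.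

Lemma partial_opp mu f p : (mu < 5)%nat -> Cinf f ->
  partial mu (fun q => - f q) p = - partial mu f p.
Proof.
  intros Hmu Hf. change (fun q => - f q) with (eval_expr (EOpp (EF f))).
  rewrite partial_eval_expr_Cinf; simpl; auto.
Qed.

Lemma partial_Fcurv_antisym A phi i j k p : Cinf_sol A phi -> (i < 5)%nat -> (j < 5)%nat -> (k < 5)%nat ->
  partial i (Fcurv A k j) p = - partial i (Fcurv A j k) p.
Proof.
  intros. rewrite (Fcurv_antisym_fun A j k). apply partial_opp; auto. apply Cinf_Fcurv with phi; auto.
Qed.

Lemma partial_const0 mu p : partial mu (fun _ => 0) p = 0.
Proof. apply partial_of_is_partial. unfold is_partial. apply derivable_pt_lim_const. Qed.

Definition current A phi j p := phi_im phi p * Dre A phi j p - phi_re phi p * Dim A phi j p.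

Definition static (A : Conn) (phi : CField) : Prop :=
  (forall nu, (nu < 5)%nat -> forall p, Fcurv A 0 nu p = 0) /\ (forall p, Dcov A phi 0 p = (0, 0)).

Lemma maxwell_static A phi j p : is_MKG A phi -> static A phi -> (j < 5)%nat ->
  partial 1 (Fcurv A j 1) p + partial 2 (Fcurv A j 2) p + partial 3 (Fcurv A j 3) p
  + partial 4 (Fcurv A j 4) p = current A phi j p.
Proof.
  intros [HM _] [HF0 _] Hj. specialize (HM j Hj p). simpl in HM.
  rewrite (Fcurv_antisym_fun A 0 j) in HM.
  replace (fun q => - Fcurv A 0 j q) with (fun _ : P5 => 0) in HM.
  2: { apply functional_extensionality; intro q. rewrite HF0; auto. ring. }
  rewrite partial_const0 in HM. unfold Jcur in HM. unfold current, phi_re, phi_im, Dre, Dim. lra.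
Qed.

Lemma wave_static A phi p : is_MKG A phi -> static A phi ->
  partial 1 (Dre A phi 1) p + partial 2 (Dre A phi 2) p + partial 3 (Dre A phi 3) p + partial 4 (Dre A phi 4) p
  - (A 1%nat p * Dim A phi 1 p + A 2%nat p * Dim A phi 2 p + A 3%nat p * Dim A phi 3 p + A 4%nat p * Dim A phi 4 p) = 0
  /\
  partial 1 (Dim A phi 1) p + partial 2 (Dim A phi 2) p + partial 3 (Dim A phi 3) p + partial 4 (Dim A phi 4) p
  + (A 1%nat p * Dre A phi 1 p + A 2%nat p * Dre A phi 2 p + A 3%nat p * Dre A phi 3 p + A 4%nat p * Dre A phi 4 p) = 0.
Proof.
  intros [_ HW] [_ HD0]. destruct (HW p) as [W1 W2]. cbn [sum_f_R0] in W1, W2.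
  assert (E : Dcov A phi 0 = fun _ => (0,0)) by (apply functional_extensionality; auto).
  assert (Z1 : fst (Dcov A (Dcov A phi 0) 0 p) = 0).
  { rewrite E. unfold Dcov; simpl. rewrite partial_const0. ring. }
  assert (Z2 : snd (Dcov A (Dcov A phi 0) 0 p) = 0).
  { rewrite E. unfold Dcov; simpl. rewrite partial_const0. ring. }
  rewrite Z1 in W1. rewrite Z2 in W2.
  change (fst (Dcov A (Dcov A phi 1) 1 p)) with (partial 1 (Dre A phi 1) p - A 1%nat p * Dim A phi 1 p) in W1.
  change (fst (Dcov A (Dcov A phi 2) 2 p)) with (partial 2 (Dre A phi 2) p - A 2%nat p * Dim A phi 2 p) in W1.
  change (fst (Dcov A (Dcov A phi 3) 3 p)) with (partial 3 (Dre A phi 3) p - A 3%nat p * Dim A phi 3 p) in W1.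
  change (fst (Dcov A (Dcov A phi 4) 4 p)) with (partial 4 (Dre A phi 4) p - A 4%nat p * Dim A phi 4 p) in W1.
  change (snd (Dcov A (Dcov A phi 1) 1 p)) with (partial 1 (Dim A phi 1) p + A 1%nat p * Dre A phi 1 p) in W2.
  change (snd (Dcov A (Dcov A phi 2) 2 p)) with (partial 2 (Dim A phi 2) p + A 2%nat p * Dre A phi 2 p) in W2.
  change (snd (Dcov A (Dcov A phi 3) 3 p)) with (partial 3 (Dim A phi 3) p + A 3%nat p * Dre A phi 3 p) in W2.
  change (snd (Dcov A (Dcov A phi 4) 4 p)) with (partial 4 (Dim A phi 4) p + A 4%nat p * Dre A phi 4 p) in W2.
  simpl eta in W1, W2. split; lra.
Qed.

(** * The Pohozaev identity *)

Definition sum_space (f : nat -> expr) : expr := EAdd (f 1%nat) (EAdd (f 2%nat) (EAdd (f 3%nat) (f 4%nat))).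
Definition expr_Dphi_sq A phi : expr :=
  sum_space (fun l => EAdd (EMul (EF (Dre A phi l)) (EF (Dre A phi l))) (EMul (EF (Dim A phi l)) (EF (Dim A phi l)))).
Definition expr_F_sq (A : Conn) : expr :=
  sum_space (fun l => sum_space (fun m => EMul (EF (Fcurv A l m)) (EF (Fcurv A l m)))).
Definition expr_stress A phi j k : expr :=
  EAdd (EAdd (EMul (EF (Dre A phi j)) (EF (Dre A phi k))) (EMul (EF (Dim A phi j)) (EF (Dim A phi k))))
     (EAdd (sum_space (fun l => EMul (EF (Fcurv A j l)) (EF (Fcurv A k l))))
         (if Nat.eqb j k then EOpp (EAdd (EMul (EC (/2)) (expr_Dphi_sq A phi)) (EMul (EC (/4)) (expr_F_sq A))) else EC 0)).
Definition xcoord (k : nat) : P5 -> R := fun q => coord q k.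
Definition expr_virial A phi j : expr := sum_space (fun k => EMul (expr_stress A phi j k) (EF (xcoord k))).

Lemma partial_xcoord mu k p : (mu < 5)%nat -> partial mu (xcoord k) p = if Nat.eqb mu k then 1 else 0.
Proof.
  intro Hmu. apply partial_of_is_partial. unfold is_partial, xcoord.
  destruct (Nat.eqb_spec mu k) as [->|Hne].
  - eapply derivable_pt_lim_ext; [|apply derivable_pt_lim_id].
    intro z. rewrite coord_upd by auto; reflexivity.
  - eapply derivable_pt_lim_ext; [|apply derivable_pt_lim_const].
    intro z. rewrite coord_upd_other by auto; reflexivity.
Qed.

Lemma Fcurv_diag_fun A l : Fcurv A l l = fun _ => 0.
Proof. apply functional_extensionality; intro q. unfold Fcurv; ring. Qed.

Lemma Fcurv_antisym A j k p : Fcurv A k j p = - Fcurv A j k p.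
Proof. unfold Fcurv; ring. Qed.

Lemma bianchi_ordered A phi i j k p : Cinf_sol A phi -> (i < j < k)%nat -> (k < 5)%nat ->
  partial k (Fcurv A i j) p = partial j (Fcurv A i k) p - partial i (Fcurv A j k) p.
Proof.
  intros HS Hijk Hk. pose proof (bianchi A phi i j k p HS ltac:(lia) ltac:(lia) Hk) as HB.
  rewrite (partial_Fcurv_antisym A phi j i k p HS) in HB by lia. lra.
Qed.

Ltac orient_covariant_derivatives A phi p HS :=
  repeat match goal with
  | |- context [partial ?j (Dre A phi ?k) p] =>
      lazymatch eval compute in (Nat.ltb k j) with
      | true => rewrite (partial_Dre_comm A phi j k p HS) by lia end
  | |- context [partial ?j (Dim A phi ?k) p] =>
      lazymatch eval compute in (Nat.ltb k j) with
      | true => rewrite (partial_Dim_comm A phi j k p HS) by lia end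
  end.

Ltac orient_Fcurv A phi p HS :=
  repeat match goal with
  | |- context [partial ?i (Fcurv A ?k ?j) p] =>
      lazymatch eval compute in (Nat.ltb j k) with
      | true => rewrite (partial_Fcurv_antisym A phi i j k p HS) by lia end
  | H : context [partial ?i (Fcurv A ?k ?j) p] |- _ =>
      lazymatch eval compute in (Nat.ltb j k) with
      | true => rewrite (partial_Fcurv_antisym A phi i j k p HS) in H by lia end
  | |- context [Fcurv A ?k ?j p] =>
      lazymatch eval compute in (Nat.ltb j k) with
      | true => rewrite (Fcurv_antisym A j k p) end
  end.

(* With T_jk the stress tensor, div (T_j. x) = div T + tr T and div T = 0 by the equations; in four
   space dimensions tr T = -|D phi|^2, the |F|^2 terms cancelling. *)
Lemma pohozaev_identity A phi p : Cinf_sol A phi -> is_MKG A phi -> static A phi ->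
  eval_expr (dexpr 1 (expr_virial A phi 1)) p + eval_expr (dexpr 2 (expr_virial A phi 2)) p
  + eval_expr (dexpr 3 (expr_virial A phi 3)) p + eval_expr (dexpr 4 (expr_virial A phi 4)) p
  = - eval_expr (expr_Dphi_sq A phi) p.
Proof.
  intros HS HM HT.
  destruct (wave_static A phi p HM HT) as [W1 W2].
  pose proof (maxwell_static A phi 1 p HM HT ltac:(lia)) as M1.
  pose proof (maxwell_static A phi 2 p HM HT ltac:(lia)) as M2.
  pose proof (maxwell_static A phi 3 p HM HT ltac:(lia)) as M3.
  pose proof (maxwell_static A phi 4 p HM HT ltac:(lia)) as M4.
  unfold expr_virial, expr_stress, expr_Dphi_sq, expr_F_sq, sum_space. cbn [eval_expr dexpr Nat.eqb].
  rewrite !partial_xcoord by lia. cbn [Nat.eqb].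
  orient_covariant_derivatives A phi p HS.
  rewrite !Fcurv_diag_fun, !partial_const0.
  rewrite !Fcurv_diag_fun in M1, M2, M3, M4. rewrite !partial_const0 in M1, M2, M3, M4.
  orient_Fcurv A phi p HS.
  rewrite ?(bianchi_ordered A phi 1 2 3 p HS), ?(bianchi_ordered A phi 1 2 4 p HS),
    ?(bianchi_ordered A phi 1 3 4 p HS), ?(bianchi_ordered A phi 2 3 4 p HS) in * by lia.
  unfold current in *.
  assert (E1 : partial 4 (Fcurv A 1 4) p = phi_im phi p * Dre A phi 1 p - phi_re phi p * Dim A phi 1 p - partial 2 (Fcurv A 1 2) p - partial 3 (Fcurv A 1 3) p) by lra.
  assert (E2 : partial 4 (Fcurv A 2 4) p = phi_im phi p * Dre A phi 2 p - phi_re phi p * Dim A phi 2 p + partial 1 (Fcurv A 1 2) p - partial 3 (Fcurv A 2 3) p) by lra.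
  assert (E3 : partial 4 (Fcurv A 3 4) p = phi_im phi p * Dre A phi 3 p - phi_re phi p * Dim A phi 3 p + partial 1 (Fcurv A 1 3) p + partial 2 (Fcurv A 2 3) p) by lra.
  assert (E4 : partial 1 (Fcurv A 1 4) p = - (phi_im phi p * Dre A phi 4 p - phi_re phi p * Dim A phi 4 p) - partial 2 (Fcurv A 2 4) p - partial 3 (Fcurv A 3 4) p) by lra.
  assert (E5 : partial 4 (Dre A phi 4) p = - (partial 1 (Dre A phi 1) p + partial 2 (Dre A phi 2) p + partial 3 (Dre A phi 3) p) + (A 1%nat p * Dim A phi 1 p + A 2%nat p * Dim A phi 2 p + A 3%nat p * Dim A phi 3 p + A 4%nat p * Dim A phi 4 p)) by lra.
  assert (E6 : partial 4 (Dim A phi 4) p = - (partial 1 (Dim A phi 1) p + partial 2 (Dim A phi 2) p + partial 3 (Dim A phi 3) p) - (A 1%nat p * Dre A phi 1 p + A 2%nat p * Dre A phi 2 p + A 3%nat p * Dre A phi 3 p + A 4%nat p * Dre A phi 4 p)) by lra.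
  rewrite E4 in *. rewrite E1, E2, E3, E5, E6.
  field.
Qed.

Fixpoint sumN (f : nat -> R) (N : nat) : R :=
  match N with O => 0 | S N => sumN f N + f N end.

Lemma sum_f_R0_sumN f n : sum_f_R0 f n = sumN f (S n).
Proof. induction n; simpl in *; [ring| rewrite IHn; ring]. Qed.

Lemma sumN_ext f g N : (forall i, (i < N)%nat -> f i = g i) -> sumN f N = sumN g N.
Proof. induction N; intro H; simpl; auto. rewrite IHN, H; auto. Qed.

Lemma sumN_plus f g N : sumN (fun i => f i + g i) N = sumN f N + sumN g N.
Proof. induction N; simpl; [ring| rewrite IHN; ring]. Qed.

Lemma sumN_minus f g N : sumN (fun i => f i - g i) N = sumN f N - sumN g N.
Proof. induction N; simpl; [ring| rewrite IHN; ring]. Qed.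

Lemma sumN_scal c f N : sumN (fun i => c * f i) N = c * sumN f N.
Proof. induction N; simpl; [ring| rewrite IHN; ring]. Qed.

Lemma sumN_le f g N : (forall i, (i < N)%nat -> f i <= g i) -> sumN f N <= sumN g N.
Proof. induction N; intro H; simpl; [lra|]. apply Rplus_le_compat; auto. Qed.

Lemma sumN_abs f N : Rabs (sumN f N) <= sumN (fun i => Rabs (f i)) N.
Proof.
  induction N; simpl. rewrite Rabs_R0; lra.
  eapply Rle_trans; [apply Rabs_triang|]. lra.
Qed.

Lemma sumN_const c N : sumN (fun _ => c) N = INR N * c.
Proof. induction N; simpl sumN; [simpl; ring|]. rewrite IHN, S_INR. ring. Qed.

Lemma sumN_split f N K : sumN f (N + K) = sumN f N + sumN (fun i => f (N + i)%nat) K.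
Proof.
  induction K; simpl. rewrite Nat.add_0_r; ring.
  rewrite Nat.add_succ_r. simpl. rewrite IHK. ring.
Qed.

Lemma sumN_reindex f N K : sumN f (N * K) = sumN (fun a => sumN (fun b => f (a * K + b)%nat) K) N.
Proof.
  induction N; simpl; auto.
  replace (K + N * K)%nat with (N * K + K)%nat by lia.
  rewrite sumN_split, IHN. reflexivity.
Qed.

Lemma sumN_swap (f : nat -> nat -> R) N K :
  sumN (fun i => sumN (fun j => f i j) K) N = sumN (fun j => sumN (fun i => f i j) N) K.
Proof.
  induction N; simpl.
  - induction K; simpl; auto. rewrite <- IHK; ring.
  - rewrite IHN. rewrite <- sumN_plus. reflexivity.
Qed.

Lemma sumN_tele (u : nat -> R) N : sumN (fun i => u (S i) - u i) N = u N - u O.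
Proof. induction N; simpl; [ring|]. rewrite IHN; ring. Qed.

Lemma sumN_nonneg f N : (forall i, (i < N)%nat -> 0 <= f i) -> 0 <= sumN f N.
Proof. intro H. replace 0 with (sumN (fun _ => 0) N). apply sumN_le; auto.
  rewrite sumN_const; ring. Qed.

Definition sum4 (N : nat) (F : nat -> nat -> nat -> nat -> R) : R :=
  sumN (fun i1 => sumN (fun i2 => sumN (fun i3 => sumN (fun i4 => F i1 i2 i3 i4) N) N) N) N.

Lemma sum4_ext N F G : (forall i1 i2 i3 i4, (i1 < N)%nat -> (i2 < N)%nat -> (i3 < N)%nat -> (i4 < N)%nat ->
  F i1 i2 i3 i4 = G i1 i2 i3 i4) -> sum4 N F = sum4 N G.
Proof.
  intro H. unfold sum4. apply sumN_ext; intros. apply sumN_ext; intros.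
  apply sumN_ext; intros. apply sumN_ext; intros. auto.
Qed.

Lemma sum4_plus N F G : sum4 N (fun a b c d => F a b c d + G a b c d) = sum4 N F + sum4 N G.
Proof.
  unfold sum4. rewrite <- sumN_plus. apply sumN_ext; intros.
  rewrite <- sumN_plus. apply sumN_ext; intros.
  rewrite <- sumN_plus. apply sumN_ext; intros.
  rewrite <- sumN_plus. reflexivity.
Qed.

Lemma sum4_scal N c F : sum4 N (fun a b d e => c * F a b d e) = c * sum4 N F.
Proof.
  unfold sum4. rewrite <- sumN_scal. apply sumN_ext; intros.
  rewrite <- sumN_scal. apply sumN_ext; intros.
  rewrite <- sumN_scal. apply sumN_ext; intros.
  rewrite <- sumN_scal. reflexivity.
Qed.

Lemma sum4_le N F G : (forall i1 i2 i3 i4, (i1 < N)%nat -> (i2 < N)%nat -> (i3 < N)%nat -> (i4 < N)%nat ->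
  F i1 i2 i3 i4 <= G i1 i2 i3 i4) -> sum4 N F <= sum4 N G.
Proof.
  intro H. unfold sum4. apply sumN_le; intros. apply sumN_le; intros.
  apply sumN_le; intros. apply sumN_le; intros. auto.
Qed.

Lemma sum4_const N c : sum4 N (fun _ _ _ _ => c) = INR N ^ 4 * c.
Proof. unfold sum4. rewrite !sumN_const. ring. Qed.

Lemma sum4_abs N F : Rabs (sum4 N F) <= sum4 N (fun a b c d => Rabs (F a b c d)).
Proof.
  unfold sum4. eapply Rle_trans; [apply sumN_abs|]. apply sumN_le; intros.
  eapply Rle_trans; [apply sumN_abs|]. apply sumN_le; intros.
  eapply Rle_trans; [apply sumN_abs|]. apply sumN_le; intros.
  apply sumN_abs.
Qed.

Lemma sum4_abs_bound N F c : (forall i1 i2 i3 i4, (i1 < N)%nat -> (i2 < N)%nat -> (i3 < N)%nat -> (i4 < N)%nat ->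
  Rabs (F i1 i2 i3 i4) <= c) -> Rabs (sum4 N F) <= INR N ^ 4 * c.
Proof.
  intro H. eapply Rle_trans; [apply sum4_abs|]. rewrite <- sum4_const. apply sum4_le. auto.
Qed.

Lemma sum4_refine N K F : sum4 (N * K) F =
  sum4 N (fun a1 a2 a3 a4 => sum4 K (fun b1 b2 b3 b4 => F (a1*K+b1)%nat (a2*K+b2)%nat (a3*K+b3)%nat (a4*K+b4)%nat)).
Proof.
  unfold sum4. rewrite sumN_reindex. apply sumN_ext; intros a1 _.
  transitivity (sumN (fun b1 => sumN (fun a2 => sumN (fun b2 => sumN (fun a3 => sumN (fun b3 =>
     sumN (fun a4 => sumN (fun b4 => F (a1*K+b1)%nat (a2*K+b2)%nat (a3*K+b3)%nat (a4*K+b4)%nat) K) N) K) N) K) N) K).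
  { apply sumN_ext; intros b1 _. rewrite sumN_reindex. apply sumN_ext; intros a2 _.
    apply sumN_ext; intros b2 _. rewrite sumN_reindex. apply sumN_ext; intros a3 _.
    apply sumN_ext; intros b3 _. rewrite sumN_reindex. reflexivity. }
  rewrite sumN_swap. apply sumN_ext; intros a2 _.
  transitivity (sumN (fun b1 => sumN (fun a3 => sumN (fun b2 => sumN (fun b3 =>
     sumN (fun a4 => sumN (fun b4 => F (a1*K+b1)%nat (a2*K+b2)%nat (a3*K+b3)%nat (a4*K+b4)%nat) K) N) K) K) N) K).
  { apply sumN_ext; intros b1 _. rewrite sumN_swap. apply sumN_ext; intros a3 _.
    apply sumN_ext; intros b2 _. reflexivity. }
  rewrite sumN_swap. apply sumN_ext; intros a3 _.
  transitivity (sumN (fun b1 => sumN (fun b2 => sumN (fun a4 => sumN (fun b3 =>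
     sumN (fun b4 => F (a1*K+b1)%nat (a2*K+b2)%nat (a3*K+b3)%nat (a4*K+b4)%nat) K) K) N) K) K).
  { apply sumN_ext; intros b1 _. apply sumN_ext; intros b2 _. rewrite sumN_swap. reflexivity. }
  transitivity (sumN (fun b1 => sumN (fun a4 => sumN (fun b2 => sumN (fun b3 =>
     sumN (fun b4 => F (a1*K+b1)%nat (a2*K+b2)%nat (a3*K+b3)%nat (a4*K+b4)%nat) K) K) K) N) K).
  { apply sumN_ext; intros b1 _. rewrite sumN_swap. reflexivity. }
  rewrite sumN_swap. reflexivity.
Qed.

(** * Riemann sums on cubes *)

Definition mesh (M : R) (N : nat) : R := 2 * M / INR N.
Definition midpoint (M : R) (N : nat) (i : nat) : R := - M + (INR i + / 2) * mesh M N.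

Lemma riemann4_sum4 g M n : riemann4 g M n =
  sum4 (S n) (fun i1 i2 i3 i4 => g (midpoint M (S n) i1) (midpoint M (S n) i2) (midpoint M (S n) i3) (midpoint M (S n) i4) * mesh M (S n) ^ 4).
Proof.
  unfold riemann4, sum4, midpoint, mesh. rewrite sum_f_R0_sumN. apply sumN_ext; intros.
  rewrite sum_f_R0_sumN. apply sumN_ext; intros.
  rewrite sum_f_R0_sumN. apply sumN_ext; intros.
  rewrite sum_f_R0_sumN. reflexivity.
Qed.

Lemma midpoint_in M N i : 0 < M -> (i < N)%nat -> - M < midpoint M N i < M.
Proof.
  intros HM Hi. unfold midpoint, mesh.
  assert (HN : 0 < INR N) by (apply lt_0_INR; lia).
  assert (Hi' : INR i + 1 <= INR N) by (rewrite <- S_INR; apply le_INR; lia).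
  assert (0 <= INR i) by apply pos_INR.
  split.
  - assert (0 < (INR i + / 2) * (2 * M / INR N)).
    { apply Rmult_lt_0_compat; [lra|]. apply Rdiv_lt_0_compat; lra. }
    lra.
  - assert (E : (INR i + / 2) * (2 * M / INR N) = 2 * M * (INR i + / 2) * / INR N) by (field; lra).
    rewrite E. apply Rlt_le_trans with (- M + 2 * M * (INR N) * / INR N).
    + apply Rplus_lt_compat_l. apply Rmult_lt_compat_r. apply Rinv_0_lt_compat; lra.
      apply Rmult_lt_compat_l; lra.
    + right. field. lra.
Qed.

Lemma mesh_pos M N : 0 < M -> (0 < N)%nat -> 0 < mesh M N.
Proof. intros. unfold mesh. apply Rdiv_lt_0_compat; [lra| apply lt_0_INR; auto]. Qed.

Lemma riemann4_plus g1 g2 M n :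
  riemann4 (fun a b c d => g1 a b c d + g2 a b c d) M n = riemann4 g1 M n + riemann4 g2 M n.
Proof. rewrite !riemann4_sum4. rewrite <- sum4_plus. apply sum4_ext; intros. ring. Qed.

Lemma riemann4_scal c g M n :
  riemann4 (fun a b d e => c * g a b d e) M n = c * riemann4 g M n.
Proof. rewrite !riemann4_sum4. rewrite <- sum4_scal. apply sum4_ext; intros. ring. Qed.

Lemma riemann4_const c M n : 0 < M -> riemann4 (fun _ _ _ _ => c) M n = c * (2 * M) ^ 4.
Proof.
  intro HM. rewrite riemann4_sum4. rewrite sum4_const. unfold mesh.
  assert (0 < INR (S n)) by (apply lt_0_INR; lia). field. lra.
Qed.

Definition in_cube (M x1 x2 x3 x4 : R) : Prop :=
  -M <= x1 <= M /\ -M <= x2 <= M /\ -M <= x3 <= M /\ -M <= x4 <= M.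

Lemma riemann4_le g1 g2 M n : 0 < M ->
  (forall x1 x2 x3 x4, in_cube M x1 x2 x3 x4 -> g1 x1 x2 x3 x4 <= g2 x1 x2 x3 x4) ->
  riemann4 g1 M n <= riemann4 g2 M n.
Proof.
  intros HM H. rewrite !riemann4_sum4. apply sum4_le; intros.
  apply Rmult_le_compat_r. apply pow_le. left; apply mesh_pos; auto; lia.
  apply H. repeat split;
  match goal with |- context [midpoint M (S n) ?i] =>
    let h := fresh in assert (h := midpoint_in M (S n) i HM ltac:(lia)); lra end.
Qed.

Lemma riemann4_ext g1 g2 M n : (forall x1 x2 x3 x4, g1 x1 x2 x3 x4 = g2 x1 x2 x3 x4) ->
  riemann4 g1 M n = riemann4 g2 M n.
Proof.
  intro H. replace g1 with g2; auto.
  do 4 (apply functional_extensionality; intro). symmetry; apply H.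
Qed.

Module UniformContinuity.
Import Coquelicot.Coquelicot.

Definition continuous4_at (g : R -> R -> R -> R -> R) (x1 x2 x3 x4 : R) : Prop :=
  forall eps, eps > 0 -> exists delta, delta > 0 /\ forall y1 y2 y3 y4,
    Rabs (y1 - x1) < delta -> Rabs (y2 - x2) < delta -> Rabs (y3 - x3) < delta -> Rabs (y4 - x4) < delta ->
    Rabs (g y1 y2 y3 y4 - g x1 x2 x3 x4) < eps.

Definition unif_continuous_cube (g : R -> R -> R -> R -> R) (M : R) : Prop :=
  forall eps, eps > 0 -> exists delta, delta > 0 /\ forall x1 x2 x3 x4 y1 y2 y3 y4,
    in_cube M x1 x2 x3 x4 -> in_cube M y1 y2 y3 y4 ->
    Rabs (y1 - x1) < delta -> Rabs (y2 - x2) < delta -> Rabs (y3 - x3) < delta -> Rabs (y4 - x4) < delta ->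
    Rabs (g y1 y2 y3 y4 - g x1 x2 x3 x4) < eps.

Lemma Rabs_sub_lt_double x y t d D : Rabs (y - x) < d -> d <= D -> Rabs (x - t) < D ->
  Rabs (y - t) < 2 * D.
Proof.
  intros. replace (y - t) with ((y - x) + (x - t)) by ring.
  eapply Rle_lt_trans; [apply Rabs_triang|]. lra.
Qed.

Lemma continuous4_gauge g eps : eps > 0 -> (forall x1 x2 x3 x4, continuous4_at g x1 x2 x3 x4) ->
  exists delta : Compactness.Tn 4 R -> posreal, forall t1 t2 t3 t4 y1 y2 y3 y4 D,
    D = pos (delta (t1, (t2, (t3, (t4, tt))))) ->
    Rabs (y1 - t1) < 2 * D -> Rabs (y2 - t2) < 2 * D -> Rabs (y3 - t3) < 2 * D -> Rabs (y4 - t4) < 2 * D ->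
    Rabs (g y1 y2 y3 y4 - g t1 t2 t3 t4) < eps / 2.
Proof.
  intros Heps Hc.
  assert (H' : forall t : Compactness.Tn 4 R, exists d : posreal,
    let '(t1, (t2, (t3, (t4, _)))) := t in forall y1 y2 y3 y4,
    Rabs (y1 - t1) < 2 * d -> Rabs (y2 - t2) < 2 * d -> Rabs (y3 - t3) < 2 * d -> Rabs (y4 - t4) < 2 * d ->
    Rabs (g y1 y2 y3 y4 - g t1 t2 t3 t4) < eps / 2).
  { intros [t1 [t2 [t3 [t4 []]]]].
    destruct (Hc t1 t2 t3 t4 (eps/2)) as [d [Hd H]]; [lra|].
    assert (Hd2 : 0 < d / 2) by lra. exists (mkposreal _ Hd2). simpl.
    intros. apply H; lra. }
  exists (fun t => proj1_sig (constructive_indefinite_description _ (H' t))).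
  intros t1 t2 t3 t4 y1 y2 y3 y4 D ->.
  destruct (constructive_indefinite_description _ (H' (t1, (t2, (t3, (t4, tt)))))) as [d Hd].
  apply Hd.
Qed.

Lemma unif_continuous_cube_of_continuous g M : (forall x1 x2 x3 x4, continuous4_at g x1 x2 x3 x4) ->
  unif_continuous_cube g M.
Proof.
  intros Hc eps Heps.
  destruct (continuous4_gauge g eps Heps Hc) as [delta Hdelta].
  destruct (compactness_value 4 (-M, (-M, (-M, (-M, tt)))) (M, (M, (M, (M, tt)))) delta) as [d Hd].
  exists d. split; [apply cond_pos|].
  intros x1 x2 x3 x4 y1 y2 y3 y4 Hx Hy H1 H2 H3 H4.
  specialize (Hd (x1, (x2, (x3, (x4, tt))))).
  apply NNPP. intro Hn. apply Hd.
  { unfold in_cube in Hx; simpl; tauto. }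
  intros [[t1 [t2 [t3 [t4 []]]]] [Ht [Hcl Hle]]]. apply Hn.
  simpl in Hcl. destruct Hcl as [C1 [C2 [C3 [C4 _]]]].
  pose proof (cond_pos (delta (t1, (t2, (t3, (t4, tt)))))) as Hdp.
  set (D := pos (delta (t1, (t2, (t3, (t4, tt)))))) in *. set (dd := pos d) in *.
  assert (Hle' : dd <= D) by exact Hle.
  assert (A1 := Hdelta t1 t2 t3 t4 x1 x2 x3 x4 D eq_refl ltac:(lra) ltac:(lra) ltac:(lra) ltac:(lra)).
  assert (A2 := Hdelta t1 t2 t3 t4 y1 y2 y3 y4 D eq_refl (Rabs_sub_lt_double x1 y1 t1 dd D H1 Hle' C1)
    (Rabs_sub_lt_double x2 y2 t2 dd D H2 Hle' C2) (Rabs_sub_lt_double x3 y3 t3 dd D H3 Hle' C3)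
    (Rabs_sub_lt_double x4 y4 t4 dd D H4 Hle' C4)).
  replace (g y1 y2 y3 y4 - g x1 x2 x3 x4)
    with ((g y1 y2 y3 y4 - g t1 t2 t3 t4) - (g x1 x2 x3 x4 - g t1 t2 t3 t4)) by ring.
  eapply Rle_lt_trans; [apply Rabs_triang|]. rewrite Rabs_Ropp. lra.
Qed.

End UniformContinuity.
Import UniformContinuity.

Definition riemann_sum (g : R -> R -> R -> R -> R) M N :=
  sum4 N (fun i1 i2 i3 i4 => g (midpoint M N i1) (midpoint M N i2) (midpoint M N i3) (midpoint M N i4) * mesh M N ^ 4).

Lemma riemann4_riemann_sum g M n : riemann4 g M n = riemann_sum g M (S n).
Proof. apply riemann4_sum4. Qed.

Lemma sum4_minus N F G : sum4 N (fun a b c d => F a b c d - G a b c d) = sum4 N F - sum4 N G.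
Proof.
  replace (sum4 N F - sum4 N G) with (sum4 N F + (-1) * sum4 N G) by ring.
  rewrite <- sum4_scal, <- sum4_plus. apply sum4_ext; intros; ring.
Qed.

Lemma midpoint_refine M N K a b : 0 < M -> (0 < N)%nat -> (b < K)%nat ->
  Rabs (midpoint M (N * K) (a * K + b) - midpoint M N a) < mesh M N / 2.
Proof.
  intros HM HN HbK.
  assert (HK : (0 < K)%nat) by lia.
  assert (HNr : 0 < INR N) by (apply lt_0_INR; auto).
  assert (HKr : 0 < INR K) by (apply lt_0_INR; auto).
  assert (Hb : INR b + 1 <= INR K) by (rewrite <- S_INR; apply le_INR; lia).
  assert (Hb0 : 0 <= INR b) by apply pos_INR.
  unfold midpoint, mesh. rewrite mult_INR, plus_INR, mult_INR.
  replace (- M + (INR a * INR K + INR b + / 2) * (2 * M / (INR N * INR K)) -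
     (- M + (INR a + / 2) * (2 * M / INR N)))
    with ((2 * M / (INR N * INR K)) * (INR b + / 2 - INR K / 2)) by (field; lra).
  rewrite Rabs_mult. rewrite Rabs_right by (left; apply Rdiv_lt_0_compat; nra).
  apply Rle_lt_trans with ((2 * M / (INR N * INR K)) * ((INR K - 1)/2)).
  - apply Rmult_le_compat_l. left; apply Rdiv_lt_0_compat; nra.
    apply Rabs_le. split; lra.
  - replace (2 * M / INR N / 2) with ((2 * M / (INR N * INR K)) * (INR K / 2)) by (field; lra).
    apply Rmult_lt_compat_l. apply Rdiv_lt_0_compat; nra. lra.
Qed.

Lemma riemann_sum_refine g M N K eps delta : 0 < M -> (0 < N)%nat -> (0 < K)%nat -> 0 < eps ->
  (forall x1 x2 x3 x4 y1 y2 y3 y4,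
    in_cube M x1 x2 x3 x4 -> in_cube M y1 y2 y3 y4 ->
    Rabs (y1 - x1) < delta -> Rabs (y2 - x2) < delta -> Rabs (y3 - x3) < delta -> Rabs (y4 - x4) < delta ->
    Rabs (g y1 y2 y3 y4 - g x1 x2 x3 x4) < eps) ->
  mesh M N / 2 <= delta ->
  Rabs (riemann_sum g M (N * K) - riemann_sum g M N) <= eps * (2 * M) ^ 4.
Proof.
  intros HM HN HK Heps Hg Hh.
  assert (HNr : 0 < INR N) by (apply lt_0_INR; auto).
  assert (HKr : 0 < INR K) by (apply lt_0_INR; auto).
  assert (EK : mesh M (N * K) = mesh M N / INR K) by (unfold mesh; rewrite mult_INR; field; lra).
  assert (Hhp : 0 < mesh M N) by (apply mesh_pos; auto).
  unfold riemann_sum at 1. rewrite sum4_refine.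
  unfold riemann_sum.
  assert (E : sum4 N (fun i1 i2 i3 i4 => g (midpoint M N i1) (midpoint M N i2) (midpoint M N i3) (midpoint M N i4) * mesh M N ^ 4)
    = sum4 N (fun a1 a2 a3 a4 => sum4 K (fun _ _ _ _ => g (midpoint M N a1) (midpoint M N a2) (midpoint M N a3) (midpoint M N a4) * mesh M (N*K) ^ 4))).
  { apply sum4_ext; intros. rewrite sum4_const, EK. field. lra. }
  rewrite E, <- sum4_minus.
  replace (eps * (2 * M) ^ 4) with (INR N ^ 4 * (INR K ^ 4 * (eps * mesh M (N * K) ^ 4))).
  2: { rewrite EK. unfold mesh. field. lra. }
  apply sum4_abs_bound. intros a1 a2 a3 a4 Ha1 Ha2 Ha3 Ha4.
  rewrite <- sum4_minus. apply sum4_abs_bound. intros b1 b2 b3 b4 Hb1 Hb2 Hb3 Hb4.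
  rewrite <- Rmult_minus_distr_r, Rabs_mult.
  rewrite (Rabs_right (mesh M (N * K) ^ 4)).
  2: { apply Rle_ge, pow_le. rewrite EK. left; apply Rdiv_lt_0_compat; lra. }
  apply Rmult_le_compat_r. apply pow_le. rewrite EK. left; apply Rdiv_lt_0_compat; lra.
  left. apply Hg.
  - repeat split;
    match goal with |- context [midpoint M N ?i] =>
      let h := fresh in assert (h := midpoint_in M N i HM ltac:(lia)); lra end.
  - repeat split;
    match goal with |- context [midpoint M (N*K) ?i] =>
      let h := fresh in assert (h := midpoint_in M (N*K) i HM ltac:(nia)); lra end.
  - eapply Rlt_le_trans; [apply midpoint_refine; auto|lra].
  - eapply Rlt_le_trans; [apply midpoint_refine; auto|lra].
  - eapply Rlt_le_trans; [apply midpoint_refine; auto|lra].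
  - eapply Rlt_le_trans; [apply midpoint_refine; auto|lra].
Qed.

Lemma riemann4_cv g M : 0 < M -> unif_continuous_cube g M -> exists I, Un_cv (riemann4 g M) I.
Proof.
  intros HM Hg.
  assert (HC : Cauchy_crit (riemann4 g M)).
  { intros eps Heps.
    set (e1 := eps / (3 * (2 * M) ^ 4)).
    assert (Hp : 0 < (2 * M) ^ 4) by (apply pow_lt; lra).
    assert (He1 : 0 < e1) by (apply Rdiv_lt_0_compat; lra).
    destruct (Hg e1 He1) as [d [Hd Hgd]].
    destruct (INR_archimed d (2 * M) Hd) as [N0 HN0].
    exists N0. intros n m Hn Hm. unfold R_dist. rewrite !riemann4_riemann_sum.
    assert (Hhn : forall k, (k >= N0)%nat -> mesh M (S k) / 2 <= d).
    { intros k Hk. unfold mesh.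
      assert (INR N0 <= INR (S k)) by (apply le_INR; lia).
      assert (0 < INR (S k)) by (apply lt_0_INR; lia).
      apply Rmult_le_reg_r with (2 * INR (S k)); [lra|].
      replace (2 * M / INR (S k) / 2 * (2 * INR (S k))) with (2 * M) by (field; lra).
      nra. }
    pose proof (riemann_sum_refine g M (S n) (S m) e1 d HM ltac:(lia) ltac:(lia) He1 Hgd (Hhn n Hn)) as R1.
    pose proof (riemann_sum_refine g M (S m) (S n) e1 d HM ltac:(lia) ltac:(lia) He1 Hgd (Hhn m Hm)) as R2.
    rewrite Nat.mul_comm in R2.
    replace (riemann_sum g M (S n) - riemann_sum g M (S m)) with
      (- (riemann_sum g M (S n * S m) - riemann_sum g M (S n)) + (riemann_sum g M (S n * S m) - riemann_sum g M (S m))) by ring.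
    eapply Rle_lt_trans; [apply Rabs_triang|]. rewrite Rabs_Ropp.
    assert (e1 * (2 * M) ^ 4 = eps / 3) by (unfold e1; field; lra). lra. }
  destruct (R_complete _ HC) as [I HI]. exists I; auto.
Qed.

Lemma sum4_swap34 N F : sum4 N (fun a b c d => F a b d c) = sum4 N F.
Proof. unfold sum4. apply sumN_ext; intros. apply sumN_ext; intros. apply sumN_swap. Qed.
Lemma sum4_swap23 N F : sum4 N (fun a b c d => F a c b d) = sum4 N F.
Proof. unfold sum4. apply sumN_ext; intros. apply sumN_swap. Qed.
Lemma sum4_swap12 N F : sum4 N (fun a b c d => F b a c d) = sum4 N F.
Proof. unfold sum4. apply sumN_swap. Qed.

Lemma riemann4_swap34 g M n : riemann4 (fun a b c d => g a b d c) M n = riemann4 g M n.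
Proof. rewrite !riemann4_sum4. rewrite <- sum4_swap34. apply sum4_ext; intros; reflexivity. Qed.
Lemma riemann4_swap23 g M n : riemann4 (fun a b c d => g a c b d) M n = riemann4 g M n.
Proof. rewrite !riemann4_sum4. rewrite <- sum4_swap23. apply sum4_ext; intros; reflexivity. Qed.
Lemma riemann4_swap12 g M n : riemann4 (fun a b c d => g b a c d) M n = riemann4 g M n.
Proof. rewrite !riemann4_sum4. rewrite <- sum4_swap12. apply sum4_ext; intros; reflexivity. Qed.

Lemma riemann4_swap24 g M n : riemann4 (fun a b c d => g a d c b) M n = riemann4 g M n.
Proof.
  transitivity (riemann4 (fun a b c d => g a c d b) M n).
  { exact (riemann4_swap34 (fun x y z w => g x z w y) M n). }
  transitivity (riemann4 (fun a b c d => g a b d c) M n).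
  { exact (riemann4_swap23 (fun x y z w => g x y w z) M n). }
  apply riemann4_swap34.
Qed.

Lemma riemann4_swap14 g M n : riemann4 (fun a b c d => g d b c a) M n = riemann4 g M n.
Proof.
  transitivity (riemann4 (fun a b c d => g d a c b) M n).
  { exact (riemann4_swap12 (fun x y z w => g w x z y) M n). }
  transitivity (riemann4 (fun a b c d => g b a c d) M n).
  { exact (riemann4_swap24 (fun x y z w => g y x z w) M n). }
  apply riemann4_swap12.
Qed.

Definition sum3 (N : nat) (F : nat -> nat -> nat -> R) : R :=
  sumN (fun i1 => sumN (fun i2 => sumN (fun i3 => F i1 i2 i3) N) N) N.

Lemma sum3_abs_bound N F c : (forall i1 i2 i3, (i1 < N)%nat -> (i2 < N)%nat -> (i3 < N)%nat ->
  Rabs (F i1 i2 i3) <= c) -> Rabs (sum3 N F) <= INR N ^ 3 * c.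
Proof.
  intro H. unfold sum3. eapply Rle_trans; [apply sumN_abs|].
  replace (INR N ^ 3 * c) with (sumN (fun _ => INR N ^ 2 * c) N) by (rewrite sumN_const; ring).
  apply sumN_le; intros.
  eapply Rle_trans; [apply sumN_abs|].
  replace (INR N ^ 2 * c) with (sumN (fun _ => INR N * c) N) by (rewrite sumN_const; ring).
  apply sumN_le; intros.
  eapply Rle_trans; [apply sumN_abs|].
  replace (INR N * c) with (sumN (fun _ => c) N) by (rewrite sumN_const; ring).
  apply sumN_le; intros. auto.
Qed.

Definition gridpoint (M : R) (N i : nat) : R := - M + INR i * mesh M N.

(* Midpoint rule for a derivative: by the mean value theorem the sum is a Riemann sum of g' at
   intermediate points, whose total is g M - g (-M) by telescoping. *)
Lemma midpoint_sum_derivative g g' M N e : 0 < M -> (0 < N)%nat ->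
  (forall s, - M <= s <= M -> derivable_pt_lim g s (g' s)) ->
  (forall s t, - M <= s <= M -> - M <= t <= M -> Rabs (t - s) < mesh M N -> Rabs (g' t - g' s) < e) ->
  Rabs (sumN (fun i => g' (midpoint M N i) * mesh M N) N - (g M - g (- M))) <= 2 * M * e.
Proof.
  intros HM HN Hg Hg'.
  set (h := mesh M N) in *.
  assert (HNr : 0 < INR N) by (apply lt_0_INR; auto).
  assert (Hh : 0 < h) by (apply mesh_pos; auto).
  assert (HhN : INR N * h = 2 * M) by (unfold h, mesh; field; lra).
  assert (Emid : forall i, midpoint M N i = gridpoint M N i + h / 2)
    by (intro; unfold midpoint, gridpoint; fold h; field).
  assert (Egrid : forall i, gridpoint M N (S i) = gridpoint M N i + h)
    by (intro; unfold gridpoint; rewrite S_INR; fold h; ring).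
  assert (Hgrid : forall i, (i <= N)%nat -> - M <= gridpoint M N i <= M).
  { intros i Hi. unfold gridpoint. fold h. assert (0 <= INR i) by apply pos_INR.
    assert (INR i <= INR N) by (apply le_INR; auto). split; nra. }
  replace (g M - g (- M)) with (sumN (fun i => g (gridpoint M N (S i)) - g (gridpoint M N i)) N).
  2: { rewrite (sumN_tele (fun i => g (gridpoint M N i))).
       unfold gridpoint. fold h. rewrite HhN. simpl. f_equal; f_equal; ring. }
  rewrite <- sumN_minus. eapply Rle_trans; [apply sumN_abs|].
  replace (2 * M * e) with (sumN (fun _ => h * e) N) by (rewrite sumN_const; nra).
  apply sumN_le. intros i Hi.
  pose proof (Hgrid i ltac:(lia)). pose proof (Hgrid (S i) ltac:(lia)). rewrite Egrid in *.
  destruct (MVT_cor2 g g' (gridpoint M N i) (gridpoint M N i + h)) as [xi [Exi Hxi]]; [lra| |].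
  { intros c Hc. apply Hg. lra. }
  rewrite Exi. replace (gridpoint M N i + h - gridpoint M N i) with h by ring.
  replace (g' (midpoint M N i) * h - g' xi * h) with (h * (g' (midpoint M N i) - g' xi)) by ring.
  rewrite Rabs_mult, Rabs_right by lra. apply Rmult_le_compat_l; [lra|]. left.
  rewrite Emid. apply Hg'; [lra|lra|]. apply Rabs_def1; lra.
Qed.

Lemma riemann4_derivative_cv0 G G' M : 0 < M ->
  (forall x1 x2 x3 x4, in_cube M x1 x2 x3 x4 ->
     derivable_pt_lim (fun s => G x1 x2 x3 s) x4 (G' x1 x2 x3 x4)) ->
  (forall x1 x2 x3, in_cube M x1 x2 x3 M -> G x1 x2 x3 M = 0 /\ G x1 x2 x3 (-M) = 0) ->
  unif_continuous_cube G' M -> Un_cv (riemann4 G' M) 0.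
Proof.
  intros HM HD HB HU eps Heps.
  assert (Hp : 0 < (2 * M) ^ 4) by (apply pow_lt; lra).
  set (e1 := eps / (2 * (2 * M) ^ 4)).
  assert (He1 : 0 < e1) by (apply Rdiv_lt_0_compat; lra).
  destruct (HU e1 He1) as [d [Hd Hgd]].
  destruct (INR_archimed d (2 * M) Hd) as [N0 HN0].
  exists N0. intros n Hn. unfold R_dist. rewrite Rminus_0_r, riemann4_riemann_sum.
  set (N := S n). set (h := mesh M N).
  assert (HNr : 0 < INR N) by (apply lt_0_INR; lia).
  assert (Hh : 0 < h) by (apply mesh_pos; auto; lia).
  assert (HhN : INR N * h = 2 * M) by (unfold h, mesh; field; lra).
  assert (Hhd : h < d).
  { assert (INR N0 <= INR N) by (apply le_INR; unfold N; lia).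
    apply Rmult_lt_reg_l with (INR N); [lra|]. rewrite HhN. nra. }
  unfold riemann_sum. fold h.
  change (sum4 N ?F) with (sum3 N (fun i1 i2 i3 => sumN (F i1 i2 i3) N)).
  apply Rle_lt_trans with (INR N ^ 3 * (h ^ 3 * (2 * M * e1))).
  2: { replace (INR N ^ 3 * (h ^ 3 * (2 * M * e1))) with ((INR N * h) ^ 3 * (2 * M) * e1) by ring.
       rewrite HhN. unfold e1.
       replace ((2 * M) ^ 3 * (2 * M) * (eps / (2 * (2 * M) ^ 4))) with (eps / 2) by (field; lra).
       lra. }
  apply sum3_abs_bound. intros i1 i2 i3 Hi1 Hi2 Hi3.
  pose proof (midpoint_in M N i1 HM Hi1). pose proof (midpoint_in M N i2 HM Hi2).
  pose proof (midpoint_in M N i3 HM Hi3).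
  set (y1 := midpoint M N i1) in *. set (y2 := midpoint M N i2) in *. set (y3 := midpoint M N i3) in *.
  destruct (HB y1 y2 y3) as [B1 B2]; [unfold in_cube; repeat split; lra|].
  rewrite (sumN_ext _ (fun i4 => h ^ 3 * (G' y1 y2 y3 (midpoint M N i4) * h))) by (intros; ring).
  rewrite sumN_scal, Rabs_mult, Rabs_right by (apply Rle_ge, pow_le; lra).
  apply Rmult_le_compat_l; [apply pow_le; lra|].
  replace (sumN _ N) with (sumN (fun i4 => G' y1 y2 y3 (midpoint M N i4) * h) N
                           - (G y1 y2 y3 M - G y1 y2 y3 (- M))) by (rewrite B1, B2; ring).
  apply midpoint_sum_derivative; [lra|lia| |].
  - intros s Hs. apply HD. unfold in_cube; repeat split; lra.
  - intros s t Hs Ht Hst. fold h in Hst. apply Hgd; try (unfold in_cube; repeat split; lra);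
      try (rewrite Rminus_diag, Rabs_R0; lra).
Qed.

Definition indicator (a b x : R) : R :=
  if Rlt_dec a x then if Rlt_dec x b then 1 else 0 else 0.

Lemma indicator_range a b x : 0 <= indicator a b x <= 1.
Proof. unfold indicator; destruct Rlt_dec; try destruct Rlt_dec; lra. Qed.

Lemma sum_indicator_ge c h a b k : 0 < h -> c - h <= a ->
  h * sumN (fun i => indicator a b (c + INR i * h)) k >= Rmin b (c + INR k * h) - a - h.
Proof.
  intros Hh Ha. induction k.
  - simpl. unfold Rmin; destruct Rle_dec; lra.
  - simpl sumN. rewrite S_INR.
    assert (Hs : 0 <= sumN (fun i => indicator a b (c + INR i * h)) k).
    { apply sumN_nonneg. intros; apply indicator_range. }
    unfold indicator at 2.
    destruct (Rlt_dec a (c + INR k * h)) as [H1|H1];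
    [destruct (Rlt_dec (c + INR k * h) b) as [H2|H2]|].
    + revert IHk. unfold Rmin; repeat destruct Rle_dec; nra.
    + revert IHk. unfold Rmin; repeat destruct Rle_dec; nra.
    + unfold Rmin; repeat destruct Rle_dec; nra.
Qed.

Lemma sum4_prod N f1 f2 f3 f4 :
  sum4 N (fun i1 i2 i3 i4 => f1 i1 * f2 i2 * f3 i3 * f4 i4) = sumN f1 N * sumN f2 N * sumN f3 N * sumN f4 N.
Proof.
  unfold sum4.
  transitivity (sumN (fun i1 => f1 i1 * (sumN f2 N * sumN f3 N * sumN f4 N)) N).
  { apply sumN_ext; intros i1 _.
    transitivity (sumN (fun i2 => (f1 i1 * f2 i2) * (sumN f3 N * sumN f4 N)) N).
    { apply sumN_ext; intros i2 _.
      transitivity (sumN (fun i3 => (f1 i1 * f2 i2 * f3 i3) * sumN f4 N) N).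
      { apply sumN_ext; intros i3 _. rewrite <- sumN_scal. reflexivity. }
      rewrite (sumN_ext _ (fun i3 => (f1 i1 * f2 i2 * sumN f4 N) * f3 i3)) by (intros; ring).
      rewrite sumN_scal. ring. }
    rewrite (sumN_ext _ (fun i2 => (f1 i1 * (sumN f3 N * sumN f4 N)) * f2 i2)) by (intros; ring).
    rewrite sumN_scal. ring. }
  rewrite (sumN_ext _ (fun i1 => (sumN f2 N * sumN f3 N * sumN f4 N) * f1 i1)) by (intros; ring).
  rewrite sumN_scal. ring.
Qed.

Lemma sum_midpoint_indicator_ge M N x r : 0 < M -> (0 < N)%nat -> mesh M N <= r ->
  Rabs x < M - r ->
  sumN (fun i => indicator (x - r) (x + r) (midpoint M N i) * mesh M N) N >= r.
Proof.
  intros HM HN Hhr Hx. apply Rabs_def2 in Hx. destruct Hx as [Hx1 Hx2].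
  set (h := mesh M N) in *. set (cc := - M + h / 2).
  assert (Hh : 0 < h) by (apply mesh_pos; auto).
  assert (HNh : INR N * h = 2 * M)
    by (unfold h, mesh; field; apply Rgt_not_eq, lt_0_INR; auto).
  assert (Emid : forall i, midpoint M N i = cc + INR i * h) by (intro; unfold midpoint, cc, h; field).
  rewrite (sumN_ext _ (fun i => h * indicator (x - r) (x + r) (cc + INR i * h)))
    by (intros; rewrite Emid; ring).
  rewrite sumN_scal.
  pose proof (sum_indicator_ge cc h (x - r) (x + r) N Hh ltac:(unfold cc; lra)).
  rewrite Rmin_left in H by (unfold cc; lra). lra.
Qed.

Lemma exists_small_radius d m1 m2 m3 m4 : 0 < d -> 0 < m1 -> 0 < m2 -> 0 < m3 -> 0 < m4 ->
  exists r, 0 < r /\ r < d /\ r < m1 /\ r < m2 /\ r < m3 /\ r < m4.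
Proof.
  intros. exists (Rmin d (Rmin (Rmin m1 m2) (Rmin m3 m4)) / 2).
  pose proof (Rmin_l d (Rmin (Rmin m1 m2) (Rmin m3 m4))).
  pose proof (Rmin_r d (Rmin (Rmin m1 m2) (Rmin m3 m4))).
  pose proof (Rmin_l (Rmin m1 m2) (Rmin m3 m4)). pose proof (Rmin_r (Rmin m1 m2) (Rmin m3 m4)).
  pose proof (Rmin_l m1 m2). pose proof (Rmin_r m1 m2). pose proof (Rmin_l m3 m4). pose proof (Rmin_r m3 m4).
  assert (0 < Rmin d (Rmin (Rmin m1 m2) (Rmin m3 m4))) by (repeat apply Rmin_pos; auto).
  repeat split; lra.
Qed.

Lemma riemann_sum_ge_box w M N x1 x2 x3 x4 r c : 0 < M -> (0 < N)%nat -> 0 <= c ->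
  (forall y1 y2 y3 y4, 0 <= w y1 y2 y3 y4) ->
  (forall y1 y2 y3 y4, Rabs (y1 - x1) < r -> Rabs (y2 - x2) < r -> Rabs (y3 - x3) < r ->
     Rabs (y4 - x4) < r -> c <= w y1 y2 y3 y4) ->
  c * (sumN (fun i => indicator (x1 - r) (x1 + r) (midpoint M N i) * mesh M N) N
       * sumN (fun i => indicator (x2 - r) (x2 + r) (midpoint M N i) * mesh M N) N
       * sumN (fun i => indicator (x3 - r) (x3 + r) (midpoint M N i) * mesh M N) N
       * sumN (fun i => indicator (x4 - r) (x4 + r) (midpoint M N i) * mesh M N) N)
  <= riemann_sum w M N.
Proof.
  intros HM HN Hc Hnn Hw.
  assert (Hh : 0 < mesh M N) by (apply mesh_pos; auto).
  rewrite <- sum4_prod, <- sum4_scal. unfold riemann_sum. apply sum4_le. intros i1 i2 i3 i4 _ _ _ _.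
  set (y1 := midpoint M N i1). set (y2 := midpoint M N i2).
  set (y3 := midpoint M N i3). set (y4 := midpoint M N i4).
  replace (c * (indicator (x1 - r) (x1 + r) y1 * mesh M N * (indicator (x2 - r) (x2 + r) y2 * mesh M N) *
      (indicator (x3 - r) (x3 + r) y3 * mesh M N) * (indicator (x4 - r) (x4 + r) y4 * mesh M N)))
    with ((c * (indicator (x1 - r) (x1 + r) y1 * indicator (x2 - r) (x2 + r) y2 *
      indicator (x3 - r) (x3 + r) y3 * indicator (x4 - r) (x4 + r) y4)) * mesh M N ^ 4) by ring.
  apply Rmult_le_compat_r; [apply pow_le; lra|].
  pose proof (Hnn y1 y2 y3 y4).
  unfold indicator.
  destruct (Rlt_dec (x1 - r) y1); [destruct (Rlt_dec y1 (x1 + r))|]; try nra;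
  destruct (Rlt_dec (x2 - r) y2); [destruct (Rlt_dec y2 (x2 + r))|]; try nra;
  destruct (Rlt_dec (x3 - r) y3); [destruct (Rlt_dec y3 (x3 + r))|]; try nra;
  destruct (Rlt_dec (x4 - r) y4); [destruct (Rlt_dec y4 (x4 + r))|]; try nra.
  ring_simplify. apply Hw; apply Rabs_def1; lra.
Qed.

Lemma riemann4_ge_eventually w M0 x1 x2 x3 x4 : 0 < M0 ->
  (forall y1 y2 y3 y4, 0 <= w y1 y2 y3 y4) ->
  continuous4_at w x1 x2 x3 x4 ->
  Rabs x1 < M0 -> Rabs x2 < M0 -> Rabs x3 < M0 -> Rabs x4 < M0 ->
  w x1 x2 x3 x4 > 0 ->
  exists c, c > 0 /\ forall M, M0 <= M -> exists N0, forall n, (n >= N0)%nat -> riemann4 w M n >= c.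
Proof.
  intros HM0 Hnn Hc H1 H2 H3 H4 Hw.
  set (c0 := w x1 x2 x3 x4 / 2).
  destruct (Hc c0) as [d [Hd Hcd]]; [unfold c0; lra|].
  destruct (exists_small_radius d (M0 - Rabs x1) (M0 - Rabs x2) (M0 - Rabs x3) (M0 - Rabs x4))
    as [r [Hr [Hrd [Hr1 [Hr2 [Hr3 Hr4]]]]]]; try lra.
  exists (c0 * r ^ 4). split; [apply Rmult_lt_0_compat; [unfold c0; lra|apply pow_lt; lra]|].
  intros M HMM.
  destruct (INR_archimed r (2 * M) Hr) as [N0 HN0].
  exists N0. intros n Hn. rewrite riemann4_riemann_sum.
  assert (HNr : 0 < INR (S n)) by (apply lt_0_INR; lia).
  assert (Hhr : mesh M (S n) <= r).
  { assert (INR N0 <= INR (S n)) by (apply le_INR; lia).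
    unfold mesh. apply Rmult_le_reg_l with (INR (S n)); [lra|].
    replace (INR (S n) * (2 * M / INR (S n))) with (2 * M) by (field; lra). nra. }
  assert (Hbox := riemann_sum_ge_box w M (S n) x1 x2 x3 x4 r c0 ltac:(lra) ltac:(lia)
    ltac:(unfold c0; lra) Hnn).
  assert (Hs : forall x, Rabs x < M0 - r ->
    sumN (fun i => indicator (x - r) (x + r) (midpoint M (S n) i) * mesh M (S n)) (S n) >= r)
    by (intros; apply sum_midpoint_indicator_ge; [lra|lia|auto|lra]).
  pose proof (Hs x1 ltac:(lra)). pose proof (Hs x2 ltac:(lra)).
  pose proof (Hs x3 ltac:(lra)). pose proof (Hs x4 ltac:(lra)).
  apply Rle_ge. eapply Rle_trans; [|apply Hbox].
  - apply Rmult_le_compat_l; [unfold c0; lra|].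
    replace (r ^ 4) with (r * r * r * r) by ring.
    repeat apply Rmult_le_compat; try lra; repeat apply Rmult_le_pos; lra.
  - intros y1 y2 y3 y4 G1 G2 G3 G4.
    assert (Hy : Rabs (w y1 y2 y3 y4 - w x1 x2 x3 x4) < c0) by (apply Hcd; lra).
    apply Rabs_def2 in Hy. unfold c0 in *. lra.
Qed.

(** * A logarithmic cutoff *)

Lemma derivable_pt_lim_glue (f g h : R -> R) a l d : 0 < d ->
  (forall x, a - d < x <= a -> h x = f x) -> (forall x, a <= x < a + d -> h x = g x) ->
  derivable_pt_lim f a l -> derivable_pt_lim g a l -> derivable_pt_lim h a l.
Proof.
  intros Hd Hf Hg Df Dg eps Heps.
  destruct (Df eps Heps) as [d1 H1]. destruct (Dg eps Heps) as [d2 H2].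
  assert (Hd' : 0 < Rmin d (Rmin d1 d2)) by (apply Rmin_pos; [auto|apply Rmin_pos; apply cond_pos]).
  exists (mkposreal _ Hd'). intros k Hk Hkd. simpl in Hkd.
  assert (Hk0 : Rabs k < d) by (eapply Rlt_le_trans; [exact Hkd| apply Rmin_l]).
  assert (Hk12 : Rabs k < Rmin d1 d2) by (eapply Rlt_le_trans; [exact Hkd| apply Rmin_r]).
  assert (Hk1 : Rabs k < d1) by (eapply Rlt_le_trans; [exact Hk12| apply Rmin_l]).
  assert (Hk2 : Rabs k < d2) by (eapply Rlt_le_trans; [exact Hk12| apply Rmin_r]).
  apply Rabs_def2 in Hk0.
  destruct (Rle_dec k 0).
  - rewrite (Hf (a + k)), (Hf a) by lra. apply H1; auto.
  - rewrite (Hg (a + k)), (Hg a) by lra. apply H2; auto.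
Qed.

Lemma derivable_pt_lim_local (f h : R -> R) x l d : 0 < d ->
  (forall y, Rabs (y - x) < d -> h y = f y) -> derivable_pt_lim f x l -> derivable_pt_lim h x l.
Proof.
  intros Hd Hfh Df eps Heps.
  destruct (Df eps Heps) as [d1 H1].
  assert (Hd' : 0 < Rmin d1 d) by (apply Rmin_pos; [apply cond_pos|auto]).
  exists (mkposreal _ Hd'). intros k Hk Hkd. simpl in Hkd.
  assert (Hk1 : Rabs k < d1) by (eapply Rlt_le_trans; [exact Hkd| apply Rmin_l]).
  assert (Hk2 : Rabs k < d) by (eapply Rlt_le_trans; [exact Hkd| apply Rmin_r]).
  rewrite (Hfh (x + k)), (Hfh x).
  - apply H1; auto.
  - rewrite Rminus_diag, Rabs_R0; auto.
  - replace (x + k - x) with k by ring; auto.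
Qed.

Definition tent (t : R) : R := Rmax 0 (Rmin (t - 1) (2 - t)).
Definition dprofile (t : R) : R := -4 * tent t.
Definition profile (t : R) : R :=
  if Rle_dec t 1 then 1 else if Rle_dec t (3/2) then 1 - 2 * (t - 1) ^ 2
  else if Rle_dec t 2 then 2 * (2 - t) ^ 2 else 0.

Lemma tent_lipschitz t u : Rabs (tent t - tent u) <= Rabs (t - u).
Proof.
  unfold tent, Rmax, Rmin. repeat destruct Rle_dec;
  unfold Rabs; repeat destruct Rcase_abs; lra.
Qed.

Lemma tent_range t : 0 <= tent t <= / 2.
Proof. unfold tent, Rmax, Rmin. repeat destruct Rle_dec; lra. Qed.

Lemma tent_zero t : t <= 1 \/ 2 <= t -> tent t = 0.
Proof. intro H. unfold tent, Rmax, Rmin. repeat destruct Rle_dec; lra. Qed.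

Lemma dprofile_continuous t : continuity_pt dprofile t.
Proof.
  intros e He. exists (e / 4). split; [lra|]. intros x [_ Hx]. simpl in *. unfold R_dist in *.
  unfold dprofile. replace (-4 * tent x - -4 * tent t) with (-4 * (tent x - tent t)) by ring.
  rewrite Rabs_mult. rewrite Rabs_left by lra.
  pose proof (tent_lipschitz x t). lra.
Qed.

Lemma profile_range t : 0 <= profile t <= 1.
Proof.
  unfold profile. repeat destruct Rle_dec; try lra.
  - split; [|nra]. assert ((t-1)^2 <= /4) by nra. lra.
  - split; [nra|]. assert ((2-t)^2 <= /4) by nra. lra.
Qed.

Lemma profile_one t : t <= 1 -> profile t = 1.
Proof. intro. unfold profile. destruct Rle_dec; lra. Qed.
Lemma profile_zero t : 2 <= t -> profile t = 0.
Proof. intro. unfold profile. repeat destruct Rle_dec; try lra. assert (t = 2) by lra. subst. ring. Qed.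

Lemma derivable_quad_fall x : derivable_pt_lim (fun t => 1 - 2 * (t - 1) ^ 2) x (-4 * (x - 1)).
Proof.
  assert (H := derivable_pt_lim_minus (fun _ => 1) (fun t => 2 * (t - 1) ^ 2) x 0 (2 * (2 * (x - 1)))).
  eapply derivable_pt_lim_ext; [| replace (-4 * (x - 1)) with (0 - 2 * (2 * (x - 1))) by ring; apply H].
  - intro; reflexivity.
  - apply derivable_pt_lim_const.
  - apply derivable_pt_lim_scal.
    replace (2 * (x - 1)) with (INR 2 * (x - 1) ^ (2 - 1) * 1) by (simpl; ring).
    apply (derivable_pt_lim_comp (fun t => t - 1) (fun t => t ^ 2)).
    + replace 1 with (1 - 0) by ring. apply derivable_pt_lim_minus; [apply derivable_pt_lim_id| apply derivable_pt_lim_const].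
    + apply derivable_pt_lim_pow.
Qed.

Lemma derivable_quad_tail x : derivable_pt_lim (fun t => 2 * (2 - t) ^ 2) x (-4 * (2 - x)).
Proof.
  replace (-4 * (2 - x)) with (2 * (INR 2 * (2 - x) ^ (2 - 1) * (0 - 1))) by (simpl; ring).
  apply derivable_pt_lim_scal.
  apply (derivable_pt_lim_comp (fun t => 2 - t) (fun t => t ^ 2)).
  - apply derivable_pt_lim_minus; [apply derivable_pt_lim_const| apply derivable_pt_lim_id].
  - apply derivable_pt_lim_pow.
Qed.

Lemma profile_derivative_lt t : t < 3/2 -> derivable_pt_lim profile t (dprofile t).
Proof.
  intro Ht. unfold dprofile.
  destruct (Rtotal_order t 1) as [H|[H|H]].
  - rewrite tent_zero by lra. replace (-4 * 0) with 0 by ring.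
    apply (derivable_pt_lim_local (fun _ => 1) _ t 0 (1 - t)); [lra| |apply derivable_pt_lim_const].
    intros y Hy. apply profile_one. apply Rabs_def2 in Hy. lra.
  - subst. rewrite tent_zero by lra. replace (-4 * 0) with 0 by ring.
    apply (derivable_pt_lim_glue (fun _ => 1) (fun t => 1 - 2 * (t - 1) ^ 2) _ 1 0 (1/2));
      [lra| | |apply derivable_pt_lim_const|].
    + intros; apply profile_one; lra.
    + intros x Hx. unfold profile. destruct (Rle_dec x 1).
      * assert (x = 1) by lra. subst. ring.
      * destruct (Rle_dec x (3/2)); [auto|lra].
    + replace 0 with (-4 * (1 - 1)) by ring. apply derivable_quad_fall.
  - replace (tent t) with (t - 1) by (unfold tent, Rmax, Rmin; repeat destruct Rle_dec; lra).
    apply (derivable_pt_lim_local (fun t => 1 - 2 * (t - 1) ^ 2) _ t _ (Rmin (t - 1) (3/2 - t)));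
      [apply Rmin_pos; lra| |apply derivable_quad_fall].
    intros y Hy. apply Rabs_def2 in Hy.
    assert (Rmin (t - 1) (3/2 - t) <= t - 1) by apply Rmin_l.
    assert (Rmin (t - 1) (3/2 - t) <= 3/2 - t) by apply Rmin_r.
    unfold profile. repeat destruct Rle_dec; lra.
Qed.

Lemma profile_derivative_ge t : 3/2 <= t -> derivable_pt_lim profile t (dprofile t).
Proof.
  intro Ht. unfold dprofile.
  destruct (Req_dec t (3/2)) as [H2|H2]; [|destruct (Rtotal_order t 2) as [H3|[H3|H3]]].
  - subst. replace (tent (3/2)) with (/2) by (unfold tent, Rmax, Rmin; repeat destruct Rle_dec; lra).
    apply (derivable_pt_lim_glue (fun t => 1 - 2 * (t - 1) ^ 2) (fun t => 2 * (2 - t) ^ 2) _ _ _ (1/4));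
      [lra| | | |].
    + intros x Hx. unfold profile. repeat destruct Rle_dec; lra.
    + intros x Hx. unfold profile. repeat destruct Rle_dec; try lra.
      assert (x = 3/2) by lra. subst. field.
    + replace (-4 * / 2) with (-4 * (3/2 - 1)) by field. apply derivable_quad_fall.
    + replace (-4 * / 2) with (-4 * (2 - 3/2)) by field. apply derivable_quad_tail.
  - replace (tent t) with (2 - t) by (unfold tent, Rmax, Rmin; repeat destruct Rle_dec; lra).
    apply (derivable_pt_lim_local (fun t => 2 * (2 - t) ^ 2) _ t _ (Rmin (t - 3/2) (2 - t)));
      [apply Rmin_pos; lra| |apply derivable_quad_tail].
    intros y Hy. apply Rabs_def2 in Hy.
    assert (Rmin (t - 3/2) (2 - t) <= t - 3/2) by apply Rmin_l.
    assert (Rmin (t - 3/2) (2 - t) <= 2 - t) by apply Rmin_r.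
    unfold profile. repeat destruct Rle_dec; lra.
  - subst. rewrite tent_zero by lra. replace (-4 * 0) with 0 by ring.
    apply (derivable_pt_lim_glue (fun t => 2 * (2 - t) ^ 2) (fun _ => 0) _ _ _ (1/4));
      [lra| | | |apply derivable_pt_lim_const].
    + intros x Hx. unfold profile. repeat destruct Rle_dec; lra.
    + intros x Hx. unfold profile. repeat destruct Rle_dec; try lra.
      assert (x = 2) by lra. subst. ring.
    + replace 0 with (-4 * (2 - 2)) by ring. apply derivable_quad_tail.
  - rewrite tent_zero by lra. replace (-4 * 0) with 0 by ring.
    apply (derivable_pt_lim_local (fun _ => 0) _ t 0 (t - 2)); [lra| |apply derivable_pt_lim_const].
    intros y Hy. apply profile_zero. apply Rabs_def2 in Hy. lra.
Qed.

Lemma profile_derivative t : derivable_pt_lim profile t (dprofile t).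
Proof.
  destruct (Rlt_le_dec t (3/2)); [apply profile_derivative_lt|apply profile_derivative_ge]; auto.
Qed.

(* For s = |x|^2: equal to 1 for s <= a^2 and to 0 for s >= a^4, with s |d/ds log_cutoff a s|
   <= 1 / ln a (dlog_cutoff_bound), so that |x| |grad chi| is O(1 / ln a) at every scale. *)
Definition log_cutoff (a s : R) : R := profile (ln s / (2 * ln a)).
Definition dlog_cutoff (a s : R) : R := dprofile (ln s / (2 * ln a)) * / (2 * ln a * s).

Lemma ln_pos_of_gt1 a : 1 < a -> 0 < ln a.
Proof. intro. rewrite <- ln_1. apply ln_increasing; lra. Qed.

Lemma ln_nonpos_arg y : y <= 0 -> ln y = 0.
Proof. intro H. unfold ln. case (Rlt_dec 0 y); intro; [exfalso; lra | reflexivity]. Qed.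

Lemma ln_le_compat x y : 0 < x -> x <= y -> ln x <= ln y.
Proof. intros. destruct (Req_dec x y); [subst; lra|]. left; apply ln_increasing; lra. Qed.

Lemma gt1_of_ln_ge1 a : 1 <= ln a -> 1 < a.
Proof.
  intro Ha. destruct (Rle_lt_dec a 0) as [H0|H0].
  - rewrite ln_nonpos_arg in Ha by lra. lra.
  - destruct (Rle_lt_dec a 1) as [H1|H1]; [|lra].
    pose proof (ln_le_compat a 1 H0 H1). rewrite ln_1 in *. lra.
Qed.

Lemma exp_sq t : exp t ^ 2 = exp (2 * t).
Proof. replace (2 * t) with (t + t) by ring. rewrite exp_plus. ring. Qed.

Lemma exp_4 t : exp t ^ 4 = exp (4 * t).
Proof. replace (4 * t) with (t + t + t + t) by ring. rewrite !exp_plus. ring. Qed.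

Lemma exp_le_compat x y : x <= y -> exp x <= exp y.
Proof. intro H. destruct (Req_dec x y); [subst; lra|]. left; apply exp_increasing; lra. Qed.

Lemma exp_gt_id t : t < exp t.
Proof.
  destruct (Rle_lt_dec t 0) as [Ht|Ht].
  - pose proof (exp_pos t). lra.
  - pose proof (exp_ineq1 t ltac:(lra)). lra.
Qed.

Lemma pow4_exp_ln a : 0 < a -> a ^ 4 = exp (4 * ln a).
Proof. intro Ha. rewrite <- exp_4, exp_ln; auto. Qed.

Lemma log_ratio_le a s c : 1 < a -> ln s <= c * (2 * ln a) -> ln s / (2 * ln a) <= c.
Proof.
  intros Ha H. pose proof (ln_pos_of_gt1 a Ha).
  apply Rmult_le_reg_r with (2 * ln a); [lra|].
  unfold Rdiv. rewrite Rmult_assoc, Rinv_l by lra. lra.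
Qed.

Lemma log_ratio_ge a s c : 1 < a -> c * (2 * ln a) <= ln s -> c <= ln s / (2 * ln a).
Proof.
  intros Ha H. pose proof (ln_pos_of_gt1 a Ha).
  apply Rmult_le_reg_r with (2 * ln a); [lra|].
  unfold Rdiv. rewrite Rmult_assoc, Rinv_l by lra. lra.
Qed.

Lemma log_cutoff_one a s : 1 < a -> s <= a ^ 2 -> log_cutoff a s = 1.
Proof.
  intros Ha Hs. unfold log_cutoff. apply profile_one. apply log_ratio_le; auto.
  destruct (Rle_dec s 0).
  - rewrite ln_nonpos_arg by auto. pose proof (ln_pos_of_gt1 a Ha). lra.
  - replace (1 * (2 * ln a)) with (INR 2 * ln a) by (simpl; ring).
    rewrite <- (ln_pow a ltac:(lra) 2). apply ln_le_compat; lra.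
Qed.

Lemma log_cutoff_zero a s : 1 < a -> a ^ 4 <= s -> log_cutoff a s = 0.
Proof.
  intros Ha Hs. unfold log_cutoff. apply profile_zero. apply log_ratio_ge; auto.
  assert (0 < a ^ 4) by (apply pow_lt; lra).
  replace (2 * (2 * ln a)) with (INR 4 * ln a) by (simpl; ring).
  rewrite <- ln_pow by lra. apply ln_le_compat; lra.
Qed.

Lemma log_cutoff_range a s : 0 <= log_cutoff a s <= 1.
Proof. apply profile_range. Qed.

Lemma dlog_cutoff_zero a s : 1 < a -> s <= a ^ 2 -> dlog_cutoff a s = 0.
Proof.
  intros Ha Hs. unfold dlog_cutoff, dprofile. rewrite tent_zero. ring.
  left. apply log_ratio_le; auto.
  destruct (Rle_dec s 0).
  - rewrite ln_nonpos_arg by auto. pose proof (ln_pos_of_gt1 a Ha). lra.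
  - replace (1 * (2 * ln a)) with (INR 2 * ln a) by (simpl; ring).
    rewrite <- (ln_pow a ltac:(lra) 2). apply ln_le_compat; lra.
Qed.

Lemma dlog_cutoff_bound a s : 1 < a -> Rabs (dlog_cutoff a s * s) <= / ln a.
Proof.
  intros Ha. pose proof (ln_pos_of_gt1 a Ha).
  destruct (Rle_dec s 0).
  - rewrite dlog_cutoff_zero; auto. rewrite Rmult_0_l, Rabs_R0. left; apply Rinv_0_lt_compat; auto.
    assert (0 <= a ^ 2) by (apply pow_le; lra). lra.
  - unfold dlog_cutoff. replace (dprofile (ln s / (2 * ln a)) * / (2 * ln a * s) * s)
      with (dprofile (ln s / (2 * ln a)) * / (2 * ln a)) by (field; lra).
    rewrite Rabs_mult. rewrite (Rabs_right (/ (2 * ln a))) by (apply Rle_ge; left; apply Rinv_0_lt_compat; lra).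
    unfold dprofile. rewrite Rabs_mult. pose proof (tent_range (ln s / (2 * ln a))).
    rewrite (Rabs_left (-4)) by lra. rewrite Rabs_right by lra.
    replace (/ ln a) with (2 * / (2 * ln a)) by (field; lra).
    apply Rmult_le_compat_r; [left; apply Rinv_0_lt_compat; lra|]. lra.
Qed.

Lemma log_cutoff_derivative a s : 1 < a -> derivable_pt_lim (log_cutoff a) s (dlog_cutoff a s).
Proof.
  intros Ha. pose proof (ln_pos_of_gt1 a Ha).
  destruct (Rle_dec s 0).
  - rewrite dlog_cutoff_zero; auto; [|assert (0 <= a ^ 2) by (apply pow_le; lra); lra].
    apply (derivable_pt_lim_local (fun _ => 1) _ s 0 1); [lra| |apply derivable_pt_lim_const].
    intros y Hy. apply Rabs_def2 in Hy. apply log_cutoff_one; auto.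
    assert (1 <= a ^ 2) by (replace 1 with (1 ^ 2) by ring; apply pow_incr; lra). lra.
  - unfold log_cutoff, dlog_cutoff.
    replace (dprofile (ln s / (2 * ln a)) * / (2 * ln a * s)) with
      (dprofile (ln s / (2 * ln a)) * (/ s * / (2 * ln a))) by (field; lra).
    apply (derivable_pt_lim_comp (fun s => ln s / (2 * ln a)) profile).
    + replace (/ s * / (2 * ln a)) with (/ (2 * ln a) * / s) by ring.
      eapply derivable_pt_lim_ext with (f := fun s => / (2 * ln a) * ln s).
      { intro; unfold Rdiv; ring. }
      apply derivable_pt_lim_scal. apply derivable_pt_lim_ln; lra.
    + apply profile_derivative.
Qed.

Lemma log_cutoff_continuous a s : 1 < a -> continuity_pt (log_cutoff a) s.
Proof. intro Ha. apply derivable_continuous_pt. exists (dlog_cutoff a s). apply log_cutoff_derivative; auto. Qed.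

Lemma dlog_cutoff_continuous a s : 1 < a -> continuity_pt (dlog_cutoff a) s.
Proof.
  intros Ha. pose proof (ln_pos_of_gt1 a Ha).
  destruct (Rle_dec s 0).
  - intros e He. exists 1. split; [lra|]. intros y [_ Hy]. simpl in Hy. unfold R_dist in *.
    apply Rabs_def2 in Hy.
    assert (1 <= a ^ 2) by (replace 1 with (1 ^ 2) by ring; apply pow_incr; lra).
    rewrite (dlog_cutoff_zero a y), (dlog_cutoff_zero a s) by (auto; lra). simpl; unfold R_dist; rewrite Rminus_diag, Rabs_R0; lra.
  - unfold dlog_cutoff.
    assert (Hg : continuity_pt (fun s => ln s / (2 * ln a)) s).
    { apply derivable_continuous_pt. exists (/ (2 * ln a) * / s).
      eapply derivable_pt_lim_ext with (f := fun s => / (2 * ln a) * ln s).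
      { intro; unfold Rdiv; ring. }
      apply derivable_pt_lim_scal. apply derivable_pt_lim_ln; lra. }
    assert (H1 : continuity_pt (fun s => dprofile (ln s / (2 * ln a))) s).
    { apply (continuity_pt_comp (fun s => ln s / (2 * ln a)) dprofile); auto. apply dprofile_continuous. }
    assert (H2 : continuity_pt (fun s => / (2 * ln a * s)) s).
    { change (continuity_pt (inv_fct (fun s0 => 2 * ln a * s0)) s).
      apply continuity_pt_inv; [|apply Rgt_not_eq; nra].
      apply derivable_continuous_pt. exists (2 * ln a * 1).
      apply derivable_pt_lim_scal. apply derivable_pt_lim_id. }
    change (continuity_pt (mult_fct (fun s0 => dprofile (ln s0 / (2 * ln a))) (fun s0 => / (2 * ln a * s0))) s).
    apply continuity_pt_mult; auto.
Qed.

Lemma is_partial_xcoord mu k p : (mu < 5)%nat -> is_partial mu (xcoord k) p (if Nat.eqb mu k then 1 else 0).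
Proof.
  intro Hmu. unfold is_partial, xcoord.
  destruct (Nat.eqb_spec mu k) as [->|Hne].
  - eapply derivable_pt_lim_ext; [|apply derivable_pt_lim_id].
    intro z. rewrite coord_upd by auto; reflexivity.
  - eapply derivable_pt_lim_ext; [|apply derivable_pt_lim_const].
    intro z. rewrite coord_upd_other by auto; reflexivity.
Qed.

Lemma Cinf_xcoord m : Cinf (xcoord m).
Proof.
  intro k. destruct k.
  - intro p. apply continuous5_at_coord.
  - split; [intro p; apply continuous5_at_coord|split].
    + intros mu Hmu p. eexists. apply is_partial_xcoord; auto.
    + intros mu Hmu. replace (partial mu (xcoord m)) with (fun _ : P5 => if Nat.eqb mu m then 1 else 0).
      apply Ck_const.
      apply functional_extensionality; intro p. symmetry. apply partial_of_is_partial, is_partial_xcoord; auto.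
Qed.

Definition expr_rsq : expr := sum_space (fun k => EMul (EF (xcoord k)) (EF (xcoord k))).
Definition rsq (q : P5) : R := eval_expr expr_rsq q.

Lemma rsq_eq q : rsq q = coord q 1 ^ 2 + coord q 2 ^ 2 + coord q 3 ^ 2 + coord q 4 ^ 2.
Proof. unfold rsq, expr_rsq, sum_space, xcoord; simpl. ring. Qed.

Lemma rsq_nonneg q : 0 <= rsq q.
Proof. rewrite rsq_eq. pose proof (pow2_ge_0 (coord q 1)). pose proof (pow2_ge_0 (coord q 2)).
  pose proof (pow2_ge_0 (coord q 3)). pose proof (pow2_ge_0 (coord q 4)). lra. Qed.

Lemma Cinf_rsq : Cinf rsq.
Proof. apply Cinf_eval_expr. unfold expr_rsq, sum_space. simpl. repeat split; apply Cinf_xcoord. Qed.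

Definition cutoff (a : R) (q : P5) : R := log_cutoff a (rsq q).
Definition dcutoff (a : R) (mu : nat) (q : P5) : R := dlog_cutoff a (rsq q) * partial mu rsq q.

Lemma is_partial_rsq mu p : (mu < 5)%nat -> is_partial mu rsq p (partial mu rsq p).
Proof. intros. apply (Ck_is_partial 0); [apply Cinf_rsq|auto]. Qed.

Lemma is_partial_cutoff a mu p : 1 < a -> (mu < 5)%nat -> is_partial mu (cutoff a) p (dcutoff a mu p).
Proof.
  intros Ha Hmu. unfold is_partial, cutoff, dcutoff.
  pose proof (is_partial_rsq mu p Hmu) as H. unfold is_partial in H.

  apply (derivable_pt_lim_comp (fun s => rsq (upd p mu s)) (log_cutoff a)); auto.
  cbv beta. rewrite upd_coord by auto. apply log_cutoff_derivative; auto.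
Qed.

Lemma partial_cutoff a mu p : 1 < a -> (mu < 5)%nat -> partial mu (cutoff a) p = dcutoff a mu p.
Proof. intros. apply partial_of_is_partial, is_partial_cutoff; auto. Qed.

Lemma C1_cutoff a : 1 < a -> Ck 1 (cutoff a).
Proof.
  intro Ha. split; [|split].
  - intro p. unfold cutoff. apply continuous5_at_comp. apply log_cutoff_continuous; auto.
    apply continuous5_pointwise. apply (Ck_continuous 0). apply Cinf_rsq.
  - intros mu Hmu p. eexists. apply is_partial_cutoff; auto.
  - intros mu Hmu. replace (partial mu (cutoff a)) with (dcutoff a mu).
    + simpl. intro p. unfold dcutoff. apply continuous5_at_mult.
      * apply continuous5_at_comp. apply dlog_cutoff_continuous; auto. apply continuous5_pointwise. apply (Ck_continuous 0). apply Cinf_rsq.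
      * apply continuous5_pointwise. apply (Ck_continuous 0). apply Cinf_partial; auto. apply Cinf_rsq.
    + apply functional_extensionality; intro p. symmetry. apply partial_cutoff; auto.
Qed.

Lemma partial_rsq j q : (1 <= j <= 4)%nat -> partial j rsq q = 2 * coord q j.
Proof.
  intro Hj. unfold rsq. rewrite partial_eval_expr_Cinf by (try lia; unfold expr_rsq, sum_space; simpl; repeat split; apply Cinf_xcoord).
  unfold expr_rsq, sum_space. simpl. rewrite !partial_xcoord by lia.
  unfold xcoord. destruct j as [|[|[|[|[|]]]]]; try lia; simpl; ring.
Qed.

Lemma cutoff_range a q : 0 <= cutoff a q <= 1.
Proof. apply log_cutoff_range. Qed.

Lemma dcutoff_xcoord_bound a j k q : 1 < a -> (1 <= j <= 4)%nat -> (1 <= k <= 4)%nat ->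
  Rabs (dcutoff a j q * coord q k) <= 2 / ln a.
Proof.
  intros Ha Hj Hk. unfold dcutoff. rewrite partial_rsq by auto.
  pose proof (dlog_cutoff_bound a (rsq q) Ha) as Hb.
  pose proof (ln_pos_of_gt1 a Ha).
  assert (Hx : Rabs (2 * coord q j * coord q k) <= 2 * rsq q).
  { rewrite rsq_eq. rewrite Rabs_mult, Rabs_mult. rewrite (Rabs_right 2) by lra.
    assert (Hjk : Rabs (coord q j) * Rabs (coord q k) <= (coord q j ^ 2 + coord q k ^ 2) / 2).
    { assert (0 <= (Rabs (coord q j) - Rabs (coord q k)) ^ 2) by apply pow2_ge_0.
      rewrite <- (pow2_abs (coord q j)), <- (pow2_abs (coord q k)). nra. }
    destruct j as [|[|[|[|[|]]]]]; try lia; destruct k as [|[|[|[|[|]]]]]; try lia; simpl in *;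
    try nra. }
  replace (dlog_cutoff a (rsq q) * (2 * coord q j) * coord q k) with (dlog_cutoff a (rsq q) * (2 * coord q j * coord q k)) by ring.
  rewrite Rabs_mult.
  destruct (Rle_dec (rsq q) 0) as [Hr|Hr].
  - rewrite dlog_cutoff_zero by (auto; assert (0 <= a ^ 2) by (apply pow_le; lra); lra).
    rewrite Rabs_R0, Rmult_0_l. apply Rlt_le, Rdiv_lt_0_compat; lra.
  - rewrite Rabs_mult in Hb. rewrite (Rabs_right (rsq q)) in Hb by lra.
    apply Rle_trans with (Rabs (dlog_cutoff a (rsq q)) * (2 * rsq q)).
    + apply Rmult_le_compat_l; [apply Rabs_pos|auto].
    + unfold Rdiv. nra.
Qed.

Lemma dcutoff_sq_bound a j q : 1 < a -> (1 <= j <= 4)%nat ->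
  (dcutoff a j q) ^ 2 <= 4 / (ln a ^ 2 * a ^ 2).
Proof.
  intros Ha Hj. unfold dcutoff. rewrite partial_rsq by auto.
  pose proof (dlog_cutoff_bound a (rsq q) Ha) as Hb.
  pose proof (ln_pos_of_gt1 a Ha).
  assert (Ha2 : 0 < a ^ 2) by (apply pow_lt; lra).
  destruct (Rle_dec (rsq q) (a ^ 2)) as [Hr|Hr].
  - rewrite dlog_cutoff_zero by auto. replace ((0 * (2 * coord q j)) ^ 2) with 0 by ring.
    apply Rlt_le, Rdiv_lt_0_compat; [lra|]. apply Rmult_lt_0_compat; auto. apply pow_lt; auto.
  - assert (Hx : coord q j ^ 2 <= rsq q).
    { rewrite rsq_eq. destruct j as [|[|[|[|[|]]]]]; try lia; simpl; nra. }
    set (d := dlog_cutoff a (rsq q)) in *. set (s := rsq q) in *.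
    rewrite Rabs_mult, (Rabs_right s) in Hb by lra.
    assert (Hd2 : (d * s) ^ 2 <= (/ ln a) ^ 2).
    { rewrite <- (pow2_abs (d * s)). rewrite Rabs_mult, (Rabs_right s) by lra.
      apply pow_incr. split; [|auto]. apply Rmult_le_pos; [apply Rabs_pos|lra]. }
    replace ((d * (2 * coord q j)) ^ 2) with (4 * d ^ 2 * coord q j ^ 2) by ring.
    apply Rle_trans with (4 * d ^ 2 * s). { apply Rmult_le_compat_l; auto. nra. }
    replace (4 * d ^ 2 * s) with (4 * (d * s) ^ 2 / s) by (field; lra).
    apply Rle_trans with (4 * (/ ln a) ^ 2 / s).
    { unfold Rdiv. apply Rmult_le_compat_r; [left; apply Rinv_0_lt_compat; lra|lra]. }
    replace (4 * (/ ln a) ^ 2 / s) with (4 / (ln a ^ 2 * s)) by (field; lra).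
    unfold Rdiv. apply Rmult_le_compat_l; [lra|]. apply Rinv_le_contravar.
    apply Rmult_lt_0_compat; [apply pow_lt; lra|lra]. apply Rmult_le_compat_l; [apply pow_le; lra|lra].
Qed.

Lemma cutoff_one a q : 1 < a -> rsq q <= a ^ 2 -> cutoff a q = 1.
Proof. intros. apply log_cutoff_one; auto. Qed.
Lemma cutoff_zero a q : 1 < a -> a ^ 4 <= rsq q -> cutoff a q = 0.
Proof. intros. apply log_cutoff_zero; auto. Qed.

Definition slice0 (f : P5 -> R) : R -> R -> R -> R -> R := fun x1 x2 x3 x4 => f (mkP 0 x1 x2 x3 x4).

Lemma continuous4_slice0 f x1 x2 x3 x4 : continuous5 f -> continuous4_at (slice0 f) x1 x2 x3 x4.
Proof.
  intros Hf eps Heps. destruct (Hf (mkP 0 x1 x2 x3 x4) eps Heps) as [d [Hd H]].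
  exists d; split; auto. intros y1 y2 y3 y4 H1 H2 H3 H4. unfold slice0. apply H.
  intros mu Hmu. destruct mu as [|[|[|[|[|]]]]]; simpl; auto; try lia.
  rewrite Rminus_diag, Rabs_R0; lra.
Qed.

Lemma unif_continuous_slice0 f M : continuous5 f -> unif_continuous_cube (slice0 f) M.
Proof. intro H. apply unif_continuous_cube_of_continuous. intros; apply continuous4_slice0; auto. Qed.

Definition energy_density A phi (q : P5) : R := eval_expr (expr_F_sq A) q / 4 + eval_expr (expr_Dphi_sq A phi) q / 2.

Lemma Fcurv_diag A l p : Fcurv A l l p = 0.
Proof. unfold Fcurv; ring. Qed.

Lemma edens_static A phi : static A phi -> edens A phi = slice0 (energy_density A phi).
Proof.
  intros [HF0 HD0].
  do 4 (apply functional_extensionality; intro).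
  unfold edens, slice0, energy_density. set (p := mkP 0 x x0 x1 x2).
  cbn [sum_f_R0 Nat.ltb Nat.leb].
  rewrite !HF0 by lia. rewrite HD0.
  unfold expr_F_sq, expr_Dphi_sq, sum_space. cbn [eval_expr].
  rewrite !Fcurv_diag.
  rewrite (Fcurv_antisym A 1 2), (Fcurv_antisym A 1 3), (Fcurv_antisym A 1 4), (Fcurv_antisym A 2 3), (Fcurv_antisym A 2 4), (Fcurv_antisym A 3 4).
  unfold Dre, Dim. simpl fst; simpl snd. field.
Qed.

Lemma Cinf_energy_density A phi : Cinf_sol A phi -> Cinf (energy_density A phi).
Proof.
  intro HS. unfold energy_density.
  change (fun q => eval_expr (expr_F_sq A) q / 4 + eval_expr (expr_Dphi_sq A phi) q / 2) with
    (eval_expr (EAdd (EMul (expr_F_sq A) (EC (/4))) (EMul (expr_Dphi_sq A phi) (EC (/2))))).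
  apply Cinf_eval_expr. unfold expr_F_sq, expr_Dphi_sq, sum_space. simpl.
  repeat split; first [apply Cinf_Fcurv with phi; auto; lia | apply Cinf_Dre; auto; lia | apply Cinf_Dim; auto; lia].
Qed.

Lemma riemann4_energy_bound A phi E : Cinf_sol A phi -> static A phi -> energy0_is A phi E ->
  forall M, 0 < M -> exists N0, forall n, (n >= N0)%nat -> riemann4 (slice0 (energy_density A phi)) M n <= E + 1.
Proof.
  intros HS HT HE M HM.
  destruct (riemann4_cv (slice0 (energy_density A phi)) M HM) as [I HI].
  { apply unif_continuous_slice0. apply (Ck_continuous 0). apply Cinf_energy_density; auto. }
  assert (HIE : I <= E).
  { destruct HE as [Hub _]. apply Hub. exists M. split; [lra|].
    unfold cube_integral. rewrite edens_static by auto. exact HI. }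
  destruct (HI 1 ltac:(lra)) as [N0 HN0]. exists N0. intros n Hn.
  specialize (HN0 n Hn). unfold R_dist in HN0. apply Rabs_def2 in HN0. lra.
Qed.

Lemma prod_le_half_sq x y : - ((x * x + y * y) / 2) <= x * y <= (x * x + y * y) / 2.
Proof. pose proof (pow2_ge_0 (x + y)); pose proof (pow2_ge_0 (x - y)); split; nra. Qed.
Lemma mul_self_nonneg x : 0 <= x * x.
Proof. nra. Qed.

Ltac squares_nonneg A phi q :=
  pose proof (mul_self_nonneg (Dre A phi 1 q)); pose proof (mul_self_nonneg (Dre A phi 2 q));
  pose proof (mul_self_nonneg (Dre A phi 3 q)); pose proof (mul_self_nonneg (Dre A phi 4 q));
  pose proof (mul_self_nonneg (Dim A phi 1 q)); pose proof (mul_self_nonneg (Dim A phi 2 q));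
  pose proof (mul_self_nonneg (Dim A phi 3 q)); pose proof (mul_self_nonneg (Dim A phi 4 q));
  pose proof (mul_self_nonneg (Fcurv A 1 1 q));
  pose proof (mul_self_nonneg (Fcurv A 1 2 q));
  pose proof (mul_self_nonneg (Fcurv A 1 3 q));
  pose proof (mul_self_nonneg (Fcurv A 1 4 q));
  pose proof (mul_self_nonneg (Fcurv A 2 1 q));
  pose proof (mul_self_nonneg (Fcurv A 2 2 q));
  pose proof (mul_self_nonneg (Fcurv A 2 3 q));
  pose proof (mul_self_nonneg (Fcurv A 2 4 q));
  pose proof (mul_self_nonneg (Fcurv A 3 1 q));
  pose proof (mul_self_nonneg (Fcurv A 3 2 q));
  pose proof (mul_self_nonneg (Fcurv A 3 3 q));
  pose proof (mul_self_nonneg (Fcurv A 3 4 q));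
  pose proof (mul_self_nonneg (Fcurv A 4 1 q));
  pose proof (mul_self_nonneg (Fcurv A 4 2 q));
  pose proof (mul_self_nonneg (Fcurv A 4 3 q));
  pose proof (mul_self_nonneg (Fcurv A 4 4 q));
  idtac.

Lemma stress_bound A phi j k q : (1 <= j <= 4)%nat -> (1 <= k <= 4)%nat ->
  Rabs (eval_expr (expr_stress A phi j k) q) <= 9 * energy_density A phi q.
Proof.
  intros Hj Hk. apply Rabs_le. squares_nonneg A phi q.
  destruct j as [|[|[|[|[|]]]]]; try lia; destruct k as [|[|[|[|[|]]]]]; try lia;
  match goal with |- context [expr_stress A phi ?j ?k] =>
    pose proof (prod_le_half_sq (Dre A phi j q) (Dre A phi k q));
    pose proof (prod_le_half_sq (Dim A phi j q) (Dim A phi k q));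
    pose proof (prod_le_half_sq (Fcurv A j 1 q) (Fcurv A k 1 q));
    pose proof (prod_le_half_sq (Fcurv A j 2 q) (Fcurv A k 2 q));
    pose proof (prod_le_half_sq (Fcurv A j 3 q) (Fcurv A k 3 q));
    pose proof (prod_le_half_sq (Fcurv A j 4 q) (Fcurv A k 4 q))
  end;
  unfold energy_density, expr_stress, expr_F_sq, expr_Dphi_sq, sum_space; cbn [eval_expr Nat.eqb]; split; lra.
Qed.

Lemma Rabs_le_between x y : Rabs x <= y -> - y <= x <= y.
Proof. unfold Rabs; destruct Rcase_abs; intros; lra. Qed.

(* The terms of div (chi_a V) in which the derivative falls on the cutoff. *)
Definition virial_error A phi a (q : P5) : R :=
  dcutoff a 1 q * eval_expr (expr_virial A phi 1) q + dcutoff a 2 q * eval_expr (expr_virial A phi 2) q +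
  dcutoff a 3 q * eval_expr (expr_virial A phi 3) q + dcutoff a 4 q * eval_expr (expr_virial A phi 4) q.

Lemma energy_density_nonneg A phi q : 0 <= energy_density A phi q.
Proof.
  unfold energy_density, expr_F_sq, expr_Dphi_sq, sum_space. cbn [eval_expr]. unfold Rdiv.
  apply Rplus_le_le_0_compat; apply Rmult_le_pos; try lra;
  repeat apply Rplus_le_le_0_compat; apply mul_self_nonneg.
Qed.

Lemma virial_error_term_bound A phi a j k q : 1 < a -> (1 <= j <= 4)%nat -> (1 <= k <= 4)%nat ->
  Rabs (dcutoff a j q * (eval_expr (expr_stress A phi j k) q * xcoord k q)) <= 18 / ln a * energy_density A phi q.
Proof.
  intros Ha Hj Hk.
  replace (dcutoff a j q * (eval_expr (expr_stress A phi j k) q * xcoord k q)) with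
    ((dcutoff a j q * coord q k) * eval_expr (expr_stress A phi j k) q) by (unfold xcoord; ring).
  rewrite Rabs_mult.
  pose proof (dcutoff_xcoord_bound a j k q Ha Hj Hk). pose proof (stress_bound A phi j k q Hj Hk).
  pose proof (energy_density_nonneg A phi q).
  replace (18 / ln a * energy_density A phi q) with ((2 / ln a) * (9 * energy_density A phi q)) by (field; pose proof (ln_pos_of_gt1 a Ha); lra).
  apply Rmult_le_compat; auto; apply Rabs_pos.
Qed.

Lemma virial_error_bound A phi a q : 1 < a -> Rabs (virial_error A phi a q) <= 288 / ln a * energy_density A phi q.
Proof.
  intro Ha. unfold virial_error, expr_virial, sum_space. cbn [eval_expr].
  assert (Hl := ln_pos_of_gt1 a Ha).
  assert (E : 288 / ln a * energy_density A phi q = 16 * (18 / ln a * energy_density A phi q)) by (field; lra).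
  rewrite E.
  repeat rewrite Rmult_plus_distr_l. apply Rabs_le.
  repeat match goal with |- context [dcutoff a ?j q * (eval_expr (expr_stress A phi ?j ?k) q * xcoord ?k q)] =>
    let h := fresh in
    assert (h := virial_error_term_bound A phi a j k q Ha ltac:(lia) ltac:(lia));
    apply Rabs_le_between in h;
    revert h;
    generalize (dcutoff a j q * (eval_expr (expr_stress A phi j k) q * xcoord k q)); intro
  end.
  intros. split; lra.
Qed.

Lemma continuous4_at_comp f (P : R -> R -> R -> R -> P5) x1 x2 x3 x4 : continuous5 f ->
  (forall y1 y2 y3 y4 d, Rabs (y1 - x1) < d -> Rabs (y2 - x2) < d -> Rabs (y3 - x3) < d -> Rabs (y4 - x4) < d ->
     forall mu, (mu < 5)%nat -> Rabs (coord (P y1 y2 y3 y4) mu - coord (P x1 x2 x3 x4) mu) < d) ->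
  continuous4_at (fun a b c d => f (P a b c d)) x1 x2 x3 x4.
Proof.
  intros Hf HP eps Heps. destruct (Hf (P x1 x2 x3 x4) eps Heps) as [d [Hd H]].
  exists d; split; [exact Hd|]. intros y1 y2 y3 y4 G1 G2 G3 G4. apply H. intros mu Hmu; apply (HP y1 y2 y3 y4 d); auto.
Qed.

Ltac coord_close_tac := intros y1 y2 y3 y4 d H1 H2 H3 H4 mu Hmu;
  match type of H1 with Rabs (_ - ?z) < _ => pose proof (Rabs_pos (y1 - z)) end;
  destruct mu as [|[|[|[|[|]]]]]; simpl; try lia; try assumption;
  rewrite Rminus_diag, Rabs_R0; lra.

Lemma riemann4_partial_cv0 W M j : 0 < M -> Ck 1 W -> (forall q, M ^ 2 <= rsq q -> W q = 0) -> (1 <= j <= 4)%nat ->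
  Un_cv (riemann4 (slice0 (partial j W)) M) 0.
Proof.
  intros HM HW HB Hj.
  assert (Hc : continuous5 (partial j W)) by (apply (Ck_continuous 0); apply Ck_partial; auto; lia).
  assert (Hr : forall x1 x2 x3 x4, rsq (mkP 0 x1 x2 x3 x4) = x1 ^ 2 + x2 ^ 2 + x3 ^ 2 + x4 ^ 2).
  { intros. rewrite rsq_eq. reflexivity. }
  assert (HD : forall p, is_partial j W p (partial j W p)) by (intro; apply (Ck_is_partial 0); auto; lia).
  destruct j as [|[|[|[|[|]]]]]; try lia.
  -     intros eps Heps.
    destruct (riemann4_derivative_cv0 (fun a b c d => slice0 W d b c a) (fun a b c d => slice0 (partial 1 W) d b c a) M HM) with (eps := eps)
      as [N0 HN0]; auto.
    + intros x1 x2 x3 x4 _. apply (HD (mkP 0 x4 x2 x3 x1)).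
    + intros x1 x2 x3 _. unfold slice0. pose proof (pow2_ge_0 x1); pose proof (pow2_ge_0 x2); pose proof (pow2_ge_0 x3). split; apply HB; rewrite Hr; nra.
    + apply unif_continuous_cube_of_continuous. intros. apply continuous4_at_comp; auto. coord_close_tac.
    + exists N0. intros n Hn. rewrite <- (riemann4_swap14 (slice0 (partial 1 W)) M n). apply HN0; auto.
  - intros eps Heps.
    destruct (riemann4_derivative_cv0 (fun a b c d => slice0 W a d c b) (fun a b c d => slice0 (partial 2 W) a d c b) M HM) with (eps := eps)
      as [N0 HN0]; auto.
    + intros x1 x2 x3 x4 _. apply (HD (mkP 0 x1 x4 x3 x2)).
    + intros x1 x2 x3 _. unfold slice0. pose proof (pow2_ge_0 x1); pose proof (pow2_ge_0 x2); pose proof (pow2_ge_0 x3). split; apply HB; rewrite Hr; nra.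
    + apply unif_continuous_cube_of_continuous. intros. apply continuous4_at_comp; auto. coord_close_tac.
    + exists N0. intros n Hn. rewrite <- (riemann4_swap24 (slice0 (partial 2 W)) M n). apply HN0; auto.
  - intros eps Heps.
    destruct (riemann4_derivative_cv0 (fun a b c d => slice0 W a b d c) (fun a b c d => slice0 (partial 3 W) a b d c) M HM) with (eps := eps)
      as [N0 HN0]; auto.
    + intros x1 x2 x3 x4 _. apply (HD (mkP 0 x1 x2 x4 x3)).
    + intros x1 x2 x3 _. unfold slice0. pose proof (pow2_ge_0 x1); pose proof (pow2_ge_0 x2); pose proof (pow2_ge_0 x3). split; apply HB; rewrite Hr; nra.
    + apply unif_continuous_cube_of_continuous. intros. apply continuous4_at_comp; auto. coord_close_tac.
    + exists N0. intros n Hn. rewrite <- (riemann4_swap34 (slice0 (partial 3 W)) M n). apply HN0; auto.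
  - apply (riemann4_derivative_cv0 (slice0 W)); auto.
    + intros x1 x2 x3 x4 _. apply (HD (mkP 0 x1 x2 x3 x4)).
    + intros x1 x2 x3 _. unfold slice0. pose proof (pow2_ge_0 x1); pose proof (pow2_ge_0 x2); pose proof (pow2_ge_0 x3). split; apply HB; rewrite Hr; nra.
    + apply unif_continuous_slice0; auto.
Qed.

Definition expr_cut_virial A phi a j : expr := EMul (EF (cutoff a)) (expr_virial A phi j).

Ltac Cinf_atoms_tac :=
  repeat match goal with |- context [if ?b then _ else _] => destruct b end;
  cbn [all_atoms]; repeat split;
  repeat match goal with
  | |- Cinf (xcoord _) => apply Cinf_xcoord
  | H : Cinf_sol ?A ?phi |- Cinf (Fcurv ?A _ _) => apply (Cinf_Fcurv A phi); auto; lia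
  | H : Cinf_sol ?A ?phi |- Cinf (Dre ?A ?phi _) => apply Cinf_Dre; auto; lia
  | H : Cinf_sol ?A ?phi |- Cinf (Dim ?A ?phi _) => apply Cinf_Dim; auto; lia
  end.

Lemma Cinf_virial A phi j : Cinf_sol A phi -> (j < 5)%nat -> all_atoms Cinf (expr_virial A phi j).
Proof. intros HS Hj. unfold expr_virial, expr_stress, expr_Dphi_sq, expr_F_sq, sum_space. Cinf_atoms_tac. Qed.

Lemma Cinf_Dphi_sq A phi : Cinf_sol A phi -> all_atoms Cinf (expr_Dphi_sq A phi).
Proof. intros HS. unfold expr_Dphi_sq, sum_space. Cinf_atoms_tac. Qed.

Lemma all_atoms_is_partial mu p e : (mu < 5)%nat -> all_atoms Cinf e -> all_atoms (fun f => exists l, is_partial mu f p l) e.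
Proof.
  intros Hmu H. eapply all_atoms_impl; [|exact H]. intros f Hf. exists (partial mu f p).
  apply (Ck_is_partial 0); [apply Hf|auto].
Qed.

Lemma partial_cut_virial A phi a j q : Cinf_sol A phi -> 1 < a -> (1 <= j <= 4)%nat ->
  partial j (eval_expr (expr_cut_virial A phi a j)) q = dcutoff a j q * eval_expr (expr_virial A phi j) q + cutoff a q * eval_expr (dexpr j (expr_virial A phi j)) q.
Proof.
  intros HS Ha Hj. unfold expr_cut_virial. rewrite partial_eval_expr by (first [lia | split; [eexists; apply is_partial_cutoff; auto; lia| apply all_atoms_is_partial; [lia| apply Cinf_virial; auto; lia]]]).
  cbn [dexpr eval_expr]. rewrite partial_cutoff by (auto; lia). ring.
Qed.

Lemma C1_cut_virial A phi a j : Cinf_sol A phi -> 1 < a -> (j < 5)%nat -> Ck 1 (eval_expr (expr_cut_virial A phi a j)).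
Proof.
  intros HS Ha Hj. apply eval_expr_Ck. unfold expr_cut_virial. split.
  - apply C1_cutoff; auto.
  - eapply all_atoms_impl; [|apply Cinf_virial; auto]. intros f Hf. apply Hf.
Qed.

Lemma cut_virial_zero A phi a j q : 1 < a -> a ^ 4 <= rsq q -> eval_expr (expr_cut_virial A phi a j) q = 0.
Proof. intros Ha Hq. unfold expr_cut_virial. cbn [eval_expr]. rewrite cutoff_zero by auto. ring. Qed.

Lemma div_cut_virial A phi a q : Cinf_sol A phi -> is_MKG A phi -> static A phi -> 1 < a ->
  partial 1 (eval_expr (expr_cut_virial A phi a 1)) q + partial 2 (eval_expr (expr_cut_virial A phi a 2)) q +
  partial 3 (eval_expr (expr_cut_virial A phi a 3)) q + partial 4 (eval_expr (expr_cut_virial A phi a 4)) q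
  = virial_error A phi a q - cutoff a q * eval_expr (expr_Dphi_sq A phi) q.
Proof.
  intros HS HM HT Ha. rewrite !partial_cut_virial by (auto; lia).
  pose proof (pohozaev_identity A phi q HS HM HT) as HP.
  unfold virial_error.
  replace (cutoff a q * eval_expr (expr_Dphi_sq A phi) q) with (- (cutoff a q * (- eval_expr (expr_Dphi_sq A phi) q))) by ring.
  rewrite <- HP. ring.
Qed.

Lemma Dphi_sq_nonneg A phi q : 0 <= eval_expr (expr_Dphi_sq A phi) q.
Proof.
  unfold expr_Dphi_sq, sum_space. cbn [eval_expr]. repeat apply Rplus_le_le_0_compat; apply mul_self_nonneg.
Qed.

Lemma cutoff_monotone a a0 q : 1 < a0 -> 1 < a -> a0 ^ 4 <= a ^ 2 -> cutoff a0 q <= cutoff a q.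
Proof.
  intros H0 H1 H2. destruct (Rle_dec (rsq q) (a ^ 2)).
  - rewrite (cutoff_one a) by auto. apply cutoff_range.
  - rewrite (cutoff_zero a0) by (auto; lra). apply cutoff_range.
Qed.

Lemma continuous_cutoff_mult a f : 1 < a -> Cinf f -> continuous5 (fun q => cutoff a q * f q).
Proof.
  intros Ha Hf. apply continuous5_pointwise. intro p. apply continuous5_at_mult; apply continuous5_pointwise.
  - apply (Ck_continuous 1). apply C1_cutoff; auto.
  - apply (Ck_continuous 0). apply Hf.
Qed.

(** * The cutoff argument *)

Lemma riemann4_opp g M n :
  riemann4 (fun a b c d => - g a b c d) M n = - riemann4 g M n.
Proof.
  rewrite (riemann4_ext _ (fun a b c d => -1 * g a b c d)) by (intros; ring).
  rewrite riemann4_scal. ring.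
Qed.

Lemma Un_cv_riemann4_opp g M :
  Un_cv (riemann4 g M) 0 -> Un_cv (riemann4 (fun a b c d => - g a b c d) M) 0.
Proof.
  intros H eps Heps. destruct (H eps Heps) as [N HN]. exists N. intros n Hn.
  specialize (HN n Hn). unfold R_dist in *. rewrite riemann4_opp, Rminus_0_r, Rabs_Ropp.
  rewrite Rminus_0_r in HN. exact HN.
Qed.

Lemma riemann4_div_cv0 (W : nat -> P5 -> R) M : 0 < M ->
  (forall l, (1 <= l <= 4)%nat -> Ck 1 (W l)) ->
  (forall l q, (1 <= l <= 4)%nat -> M ^ 2 <= rsq q -> W l q = 0) ->
  Un_cv (riemann4 (slice0 (fun q => partial 1 (W 1%nat) q + partial 2 (W 2%nat) q
                                    + partial 3 (W 3%nat) q + partial 4 (W 4%nat) q)) M) 0.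
Proof.
  intros HM HW HB.
  assert (Hl : forall l, (1 <= l <= 4)%nat -> Un_cv (riemann4 (slice0 (partial l (W l))) M) 0).
  { intros l Hl. apply riemann4_partial_cv0; auto. }
  assert (Hsum : Un_cv (fun n => riemann4 (slice0 (partial 1 (W 1%nat))) M n
    + riemann4 (slice0 (partial 2 (W 2%nat))) M n + riemann4 (slice0 (partial 3 (W 3%nat))) M n
    + riemann4 (slice0 (partial 4 (W 4%nat))) M n) (0 + 0 + 0 + 0)).
  { repeat apply CV_plus; apply Hl; lia. }
  rewrite !Rplus_0_r in Hsum.
  intros eps Heps. destruct (Hsum eps Heps) as [N HN]. exists N. intros n Hn.
  unfold slice0. rewrite !riemann4_plus. apply HN; auto.
Qed.

Lemma exists_large_scale a M0 C : 1 < a ->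
  exists b, 1 < b /\ 1 <= ln b /\ C < ln b /\ a ^ 4 <= b ^ 2 /\ M0 <= b ^ 2 + 1.
Proof.
  intro Ha. pose proof (ln_pos_of_gt1 a Ha).
  set (T := 2 * ln a + Rabs M0 + Rabs C + 1).
  pose proof (Rle_abs M0). pose proof (Rle_abs C). pose proof (Rabs_pos M0). pose proof (Rabs_pos C).
  exists (exp T). rewrite ln_exp.
  assert (HT : T < exp T) by apply exp_gt_id.
  repeat split; try (unfold T in *; lra).
  - rewrite pow4_exp_ln by lra. rewrite exp_sq. apply exp_le_compat. unfold T. lra.
  - assert (exp T <= exp T ^ 2) by (assert (1 <= exp T) by (unfold T in *; lra); nra).
    unfold T in *. lra.
Qed.

(* If w a is dominated by a divergence plus K / ln a times a density of bounded integral, letting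
   the cutoff scale a grow forces w to vanish. *)
Section CutoffArgument.

Variables (w div : R -> P5 -> R) (e : P5 -> R) (K B : R).

Hypothesis K_ge0 : 0 <= K.
Hypothesis w_continuous : forall a, 1 < a -> continuous5 (w a).
Hypothesis w_ge0 : forall a q, 0 <= w a q.
Hypothesis w_monotone : forall a0 a q, 1 < a0 -> 1 < a -> a0 ^ 4 <= a ^ 2 -> w a0 q <= w a q.
Hypothesis div_cv0 : forall a M, 1 < a -> 0 < M -> a ^ 4 <= M ^ 2 ->
  Un_cv (riemann4 (slice0 (div a)) M) 0.
Hypothesis w_le_div : forall a q, 1 <= ln a -> c0 q = 0 -> w a q <= div a q + K / ln a * e q.
Hypothesis e_bounded : forall M, 0 < M ->
  exists N0, forall n, (n >= N0)%nat -> riemann4 (slice0 e) M n <= B.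

Lemma density_vanishes_by_cutoff a x1 x2 x3 x4 : 1 < a -> w a (mkP 0 x1 x2 x3 x4) = 0.
Proof.
  intro Ha.
  destruct (Req_dec (w a (mkP 0 x1 x2 x3 x4)) 0) as [|Hnz]; [assumption|exfalso].
  assert (Hpos : w a (mkP 0 x1 x2 x3 x4) > 0) by (pose proof (w_ge0 a (mkP 0 x1 x2 x3 x4)); lra).
  pose proof (Rabs_pos x1). pose proof (Rabs_pos x2). pose proof (Rabs_pos x3). pose proof (Rabs_pos x4).
  set (M0 := Rabs x1 + Rabs x2 + Rabs x3 + Rabs x4 + 1).
  destruct (riemann4_ge_eventually (slice0 (w a)) M0 x1 x2 x3 x4) as [c [Hc Hlow]];
    [unfold M0; lra|intros; apply w_ge0|apply continuous4_slice0, w_continuous; lra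
    |unfold M0; lra..|exact Hpos|].
  destruct (exists_large_scale a M0 (2 * K * (Rabs B + 1) / c) Ha)
    as [b [Hb1 [Hlnb [HKB [Hab HM]]]]].
  set (M := b ^ 2 + 1) in *.
  assert (HbM : b ^ 4 <= M ^ 2) by (unfold M; nra).
  assert (HMpos : 0 < M) by (unfold M0 in HM; lra).
  destruct (Hlow M HM) as [N0 HN0].
  destruct (div_cv0 b M Hb1 HMpos HbM (c / 4) ltac:(lra)) as [N1 HN1].
  destruct (e_bounded M HMpos) as [N2 HN2].
  set (n := (N0 + N1 + N2)%nat).
  specialize (HN0 n ltac:(unfold n; lia)). specialize (HN1 n ltac:(unfold n; lia)).
  specialize (HN2 n ltac:(unfold n; lia)).
  unfold R_dist in HN1. rewrite Rminus_0_r in HN1. apply Rabs_def2 in HN1.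
  assert (Hmono : riemann4 (slice0 (w a)) M n <= riemann4 (slice0 (w b)) M n).
  { apply riemann4_le; [lra|]. intros. apply w_monotone; lra. }
  assert (Hdiv : riemann4 (slice0 (w b)) M n
                 <= riemann4 (slice0 (div b)) M n + K / ln b * riemann4 (slice0 e) M n).
  { rewrite <- riemann4_scal, <- riemann4_plus. apply riemann4_le; [lra|].
    intros. apply w_le_div; [lra|reflexivity]. }
  assert (Herr : K / ln b * riemann4 (slice0 e) M n < c / 2).
  { apply Rle_lt_trans with (K / ln b * (Rabs B + 1)).
    { apply Rmult_le_compat_l; [apply Rmult_le_pos; [lra|left; apply Rinv_0_lt_compat; lra]|].
      pose proof (Rle_abs B). lra. }
    apply Rmult_lt_reg_r with (2 * ln b / c); [apply Rdiv_lt_0_compat; lra|].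
    replace (K / ln b * (Rabs B + 1) * (2 * ln b / c)) with (2 * K * (Rabs B + 1) / c) by (field; lra).
    replace (c / 2 * (2 * ln b / c)) with (ln b) by (field; lra). exact HKB. }
  lra.
Qed.

End CutoffArgument.

(** * Vanishing of the covariant derivatives of phi *)

Lemma exists_cutoff_scale q : exists a, 1 < a /\ rsq q <= a ^ 2.
Proof. exists (rsq q + 2). pose proof (rsq_nonneg q). split; nra. Qed.

Lemma Dphi_sq_vanishes A phi E : Cinf_sol A phi -> is_MKG A phi -> static A phi -> energy0_is A phi E ->
  forall x1 x2 x3 x4, eval_expr (expr_Dphi_sq A phi) (mkP 0 x1 x2 x3 x4) = 0.
Proof.
  intros HS HM HT HE x1 x2 x3 x4.
  set (SD := eval_expr (expr_Dphi_sq A phi)).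
  set (W := fun a l => eval_expr (expr_cut_virial A phi a l)).
  destruct (exists_cutoff_scale (mkP 0 x1 x2 x3 x4)) as [a [Ha Hx]].
  enough (Hw : cutoff a (mkP 0 x1 x2 x3 x4) * SD (mkP 0 x1 x2 x3 x4) = 0)
    by (rewrite (cutoff_one a _ Ha Hx) in Hw; lra).
  apply (density_vanishes_by_cutoff (fun a q => cutoff a q * SD q)
    (fun a q => - (partial 1 (W a 1%nat) q + partial 2 (W a 2%nat) q
                   + partial 3 (W a 3%nat) q + partial 4 (W a 4%nat) q))
    (energy_density A phi) 288 (E + 1)); auto; try lra.
  - intros b Hb. apply continuous_cutoff_mult; auto. apply Cinf_eval_expr, Cinf_Dphi_sq; auto.
  - intros b q. apply Rmult_le_pos; [apply cutoff_range|apply Dphi_sq_nonneg].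
  - intros b0 b q Hb0 Hb Hbb. apply Rmult_le_compat_r; [apply Dphi_sq_nonneg|].
    apply cutoff_monotone; auto.
  - intros b M Hb HM0 HbM. apply Un_cv_riemann4_opp, riemann4_div_cv0; auto.
    + intros l Hl. apply C1_cut_virial; auto; lia.
    + intros l q Hl Hq. apply cut_virial_zero; auto; lra.
  - intros b q Hb _. apply gt1_of_ln_ge1 in Hb.
    pose proof (div_cut_virial A phi b q HS HM HT Hb).
    pose proof (Rabs_le_between _ _ (virial_error_bound A phi b q Hb)).
    unfold W, SD. lra.
  - apply riemann4_energy_bound; auto.
Qed.

(** * Vanishing of the curvature *)

Lemma partial_plus mu f g q : (mu < 5)%nat -> Cinf f -> Cinf g ->
  partial mu (fun p => f p + g p) q = partial mu f q + partial mu g q.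
Proof.
  intros. change (fun p => f p + g p) with (eval_expr (EAdd (EF f) (EF g))).
  rewrite partial_eval_expr_Cinf; simpl; auto.
Qed.

Lemma partial_sum4 mu f1 f2 f3 f4 q : (mu < 5)%nat -> Cinf f1 -> Cinf f2 -> Cinf f3 -> Cinf f4 ->
  partial mu (fun p => f1 p + f2 p + f3 p + f4 p) q =
  partial mu f1 q + partial mu f2 q + partial mu f3 q + partial mu f4 q.
Proof.
  intros. change (fun p => f1 p + f2 p + f3 p + f4 p) with (eval_expr (EAdd (EAdd (EAdd (EF f1) (EF f2)) (EF f3)) (EF f4))).
  rewrite partial_eval_expr_Cinf; simpl; auto.
Qed.

Lemma partial_vanishing_on_slice f j q : (forall p, c0 p = 0 -> f p = 0) -> (1 <= j <= 4)%nat -> c0 q = 0 ->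
  partial j f q = 0.
Proof.
  intros Hf Hj Hq. apply partial_of_is_partial. unfold is_partial.
  eapply derivable_pt_lim_ext; [|apply (derivable_pt_lim_const 0)].
  intro s. symmetry. apply Hf. destruct q; destruct j as [|[|[|[|[|]]]]]; simpl in *; auto; lia.
Qed.

Definition lap (h : P5 -> R) (q : P5) : R :=
  partial 1 (partial 1 h) q + partial 2 (partial 2 h) q + partial 3 (partial 3 h) q + partial 4 (partial 4 h) q.

Lemma lap_term A phi j k l q : Cinf_sol A phi -> (j < 5)%nat -> (k < 5)%nat -> (l < 5)%nat ->
  partial l (partial l (Fcurv A j k)) q =
  partial j (partial l (Fcurv A l k)) q + partial k (partial l (Fcurv A j l)) q.
Proof.
  intros HS Hj Hk Hl.
  assert (Hf : partial l (Fcurv A j k) = fun p => partial j (Fcurv A l k) p + partial k (Fcurv A j l) p).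
  { apply functional_extensionality; intro p.
    pose proof (bianchi A phi l j k p HS Hl Hj Hk) as HB.
    rewrite (partial_Fcurv_antisym A phi j l k p HS) in HB by auto.
    rewrite (partial_Fcurv_antisym A phi k j l p HS) in HB by auto. lra. }
  rewrite Hf. rewrite partial_plus; auto.
  - rewrite (Cinf_partial_comm (Fcurv A l k) l j), (Cinf_partial_comm (Fcurv A j l) l k); auto;
    apply (Cinf_Fcurv A phi); auto.
  - apply Cinf_partial; auto. apply (Cinf_Fcurv A phi); auto.
  - apply Cinf_partial; auto. apply (Cinf_Fcurv A phi); auto.
Qed.

Lemma div_Fcurv_left A phi k : is_MKG A phi -> static A phi -> Cinf_sol A phi -> (k < 5)%nat ->
  (fun p => partial 1 (Fcurv A 1 k) p + partial 2 (Fcurv A 2 k) p + partial 3 (Fcurv A 3 k) p + partial 4 (Fcurv A 4 k) p)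
  = (fun p => - current A phi k p).
Proof.
  intros HM HT HS Hk. apply functional_extensionality; intro p.
  pose proof (maxwell_static A phi k p HM HT Hk) as HX.
  rewrite (partial_Fcurv_antisym A phi 1 k 1 p HS), (partial_Fcurv_antisym A phi 2 k 2 p HS),
     (partial_Fcurv_antisym A phi 3 k 3 p HS), (partial_Fcurv_antisym A phi 4 k 4 p HS) by lia.
  lra.
Qed.

Lemma div_Fcurv_right A phi j : is_MKG A phi -> static A phi -> (j < 5)%nat ->
  (fun p => partial 1 (Fcurv A j 1) p + partial 2 (Fcurv A j 2) p + partial 3 (Fcurv A j 3) p + partial 4 (Fcurv A j 4) p)
  = (fun p => current A phi j p).
Proof.
  intros HM HT Hj. apply functional_extensionality; intro p. apply maxwell_static; auto.
Qed.

(* The Bianchi identity and d^k F_jk = J_j = 0 make every F_jk harmonic on the slice. *)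
Lemma lap_Fcurv A phi j k q : Cinf_sol A phi -> is_MKG A phi -> static A phi ->
  (forall m p, (m < 5)%nat -> c0 p = 0 -> current A phi m p = 0) ->
  (1 <= j <= 4)%nat -> (1 <= k <= 4)%nat -> c0 q = 0 -> lap (Fcurv A j k) q = 0.
Proof.
  intros HS HM HT HJ Hj Hk Hq. unfold lap.
  rewrite !(lap_term A phi j k) by (auto; lia).
  assert (AF : forall m n, (m < 5)%nat -> (n < 5)%nat -> Cinf (partial n (Fcurv A m n))).
  { intros. apply Cinf_partial; auto. apply (Cinf_Fcurv A phi); auto. }
  assert (AF1 : forall m n l, (m < 5)%nat -> (n < 5)%nat -> (l < 5)%nat -> Cinf (partial l (Fcurv A m n))).
  { intros. apply Cinf_partial; auto. apply (Cinf_Fcurv A phi); auto. }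
  replace (partial j (partial 1 (Fcurv A 1 k)) q + partial k (partial 1 (Fcurv A j 1)) q +
    (partial j (partial 2 (Fcurv A 2 k)) q + partial k (partial 2 (Fcurv A j 2)) q) +
    (partial j (partial 3 (Fcurv A 3 k)) q + partial k (partial 3 (Fcurv A j 3)) q) +
    (partial j (partial 4 (Fcurv A 4 k)) q + partial k (partial 4 (Fcurv A j 4)) q))
  with ((partial j (partial 1 (Fcurv A 1 k)) q + partial j (partial 2 (Fcurv A 2 k)) q +
         partial j (partial 3 (Fcurv A 3 k)) q + partial j (partial 4 (Fcurv A 4 k)) q) +
        (partial k (partial 1 (Fcurv A j 1)) q + partial k (partial 2 (Fcurv A j 2)) q +
         partial k (partial 3 (Fcurv A j 3)) q + partial k (partial 4 (Fcurv A j 4)) q)) by ring.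
  rewrite <- !partial_sum4 by (first [lia | apply AF1; lia]).
  rewrite (div_Fcurv_left A phi k HM HT HS), (div_Fcurv_right A phi j HM HT) by lia.
  assert (Z1 : partial j (fun p => - current A phi k p) q = 0).
  { apply partial_vanishing_on_slice; auto. intros p Hp. rewrite HJ; auto; [ring|lia]. }
  assert (Z2 : partial k (fun p => current A phi j p) q = 0).
  { apply partial_vanishing_on_slice; auto. intros p Hp. apply HJ; auto; lia. }
  rewrite Z1, Z2. ring.
Qed.

Definition expr_cut_energy a (h : P5 -> R) l : expr :=
  EMul (EMul (EF (cutoff a)) (EF (cutoff a))) (EMul (EF h) (EF (partial l h))).

Lemma partial_cut_energy a h l q : 1 < a -> Cinf h -> (1 <= l <= 4)%nat ->
  partial l (eval_expr (expr_cut_energy a h l)) q =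
  (dcutoff a l q * cutoff a q + cutoff a q * dcutoff a l q) * (h q * partial l h q) +
  cutoff a q * cutoff a q * (partial l h q * partial l h q + h q * partial l (partial l h) q).
Proof.
  intros Ha Hh Hl. unfold expr_cut_energy.
  rewrite partial_eval_expr.
  - cbn [dexpr eval_expr]. rewrite partial_cutoff by (auto; lia). ring.
  - lia.
  - cbn [all_atoms]. repeat split; try (eexists; apply is_partial_cutoff; auto; lia).
    + exists (partial l h q). apply (Ck_is_partial 0); [apply Hh|lia].
    + exists (partial l (partial l h) q). apply (Ck_is_partial 0); [apply Cinf_partial; auto; lia|lia].
Qed.

Definition grad_sq (h : P5 -> R) (q : P5) : R :=
  partial 1 h q * partial 1 h q + partial 2 h q * partial 2 h q +
  partial 3 h q * partial 3 h q + partial 4 h q * partial 4 h q.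

Definition dcutoff_norm2 a q : R :=
  dcutoff a 1 q * dcutoff a 1 q + dcutoff a 2 q * dcutoff a 2 q + dcutoff a 3 q * dcutoff a 3 q + dcutoff a 4 q * dcutoff a 4 q.

(* div (chi^2 h grad h) = chi^2 |grad h|^2 + 2 chi h grad chi . grad h for harmonic h; the cross
   term is absorbed by Young's inequality. *)
Lemma caccioppoli_ineq a h q : 1 < a -> Cinf h -> lap h q = 0 ->
  cutoff a q * cutoff a q * grad_sq h q / 2 <=
  partial 1 (eval_expr (expr_cut_energy a h 1)) q + partial 2 (eval_expr (expr_cut_energy a h 2)) q + partial 3 (eval_expr (expr_cut_energy a h 3)) q
  + partial 4 (eval_expr (expr_cut_energy a h 4)) q + 2 * (h q * h q) * dcutoff_norm2 a q.
Proof.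
  intros Ha Hh HL. rewrite !partial_cut_energy by (auto; lia).
  unfold lap in HL. unfold grad_sq, dcutoff_norm2.
  assert (E4 : partial 4 (partial 4 h) q = - (partial 1 (partial 1 h) q + partial 2 (partial 2 h) q + partial 3 (partial 3 h) q)) by lra.
  rewrite E4.
  pose proof (pow2_ge_0 (cutoff a q * partial 1 h q + 2 * h q * dcutoff a 1 q)).
  pose proof (pow2_ge_0 (cutoff a q * partial 2 h q + 2 * h q * dcutoff a 2 q)).
  pose proof (pow2_ge_0 (cutoff a q * partial 3 h q + 2 * h q * dcutoff a 3 q)).
  pose proof (pow2_ge_0 (cutoff a q * partial 4 h q + 2 * h q * dcutoff a 4 q)).
  nra.
Qed.

Lemma Fcurv_sq_le A phi j k q : (1 <= j <= 4)%nat -> (1 <= k <= 4)%nat ->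
  Fcurv A j k q * Fcurv A j k q <= 2 * energy_density A phi q.
Proof.
  intros Hj Hk. pose proof (Dphi_sq_nonneg A phi q).
  unfold energy_density, expr_F_sq, sum_space. cbn [eval_expr].
  rewrite !Fcurv_diag.
  rewrite (Fcurv_antisym A 1 2), (Fcurv_antisym A 1 3), (Fcurv_antisym A 1 4), (Fcurv_antisym A 2 3), (Fcurv_antisym A 2 4), (Fcurv_antisym A 3 4).
  pose proof (mul_self_nonneg (Fcurv A 1 2 q)). pose proof (mul_self_nonneg (Fcurv A 1 3 q)). pose proof (mul_self_nonneg (Fcurv A 1 4 q)).
  pose proof (mul_self_nonneg (Fcurv A 2 3 q)). pose proof (mul_self_nonneg (Fcurv A 2 4 q)). pose proof (mul_self_nonneg (Fcurv A 3 4 q)).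
  destruct j as [|[|[|[|[|]]]]]; try lia; destruct k as [|[|[|[|[|]]]]]; try lia;
  rewrite ?Fcurv_diag, ?(Fcurv_antisym A 1 2), ?(Fcurv_antisym A 1 3), ?(Fcurv_antisym A 1 4), ?(Fcurv_antisym A 2 3), ?(Fcurv_antisym A 2 4), ?(Fcurv_antisym A 3 4);
  nra.
Qed.

Definition expr_grad_sq (h : P5 -> R) : expr :=
  EAdd (EAdd (EAdd (EMul (EF (partial 1 h)) (EF (partial 1 h))) (EMul (EF (partial 2 h)) (EF (partial 2 h))))
     (EMul (EF (partial 3 h)) (EF (partial 3 h)))) (EMul (EF (partial 4 h)) (EF (partial 4 h))).

Lemma grad_sq_nonneg h q : 0 <= grad_sq h q.
Proof. unfold grad_sq. pose proof (mul_self_nonneg (partial 1 h q)). pose proof (mul_self_nonneg (partial 2 h q)).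
  pose proof (mul_self_nonneg (partial 3 h q)). pose proof (mul_self_nonneg (partial 4 h q)). lra. Qed.

Lemma continuous_cut_grad_sq a h : 1 < a -> Cinf h -> continuous5 (fun q => cutoff a q * cutoff a q * grad_sq h q / 2).
Proof.
  intros Ha Hh.
  change (fun q => cutoff a q * cutoff a q * grad_sq h q / 2) with
    (eval_expr (EMul (EMul (EMul (EF (cutoff a)) (EF (cutoff a))) (expr_grad_sq h)) (EC (/ 2)))).
  apply (Ck_continuous 0). apply eval_expr_Ck. unfold expr_grad_sq. cbn [all_atoms]. repeat split;
  match goal with
  | |- Ck 0 (cutoff a) => apply (Ck_S 0); apply C1_cutoff; auto
  | |- Ck 0 (partial ?l h) => apply (Cinf_partial h l ltac:(lia) Hh)
  end.
Qed.

Lemma C1_cut_energy a h l : 1 < a -> Cinf h -> (l < 5)%nat -> Ck 1 (eval_expr (expr_cut_energy a h l)).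
Proof.
  intros Ha Hh Hl. apply eval_expr_Ck. unfold expr_cut_energy. cbn [all_atoms].
  split; [split; apply C1_cutoff; auto|split; [apply Hh| apply (Cinf_partial h l Hl Hh)]].
Qed.

Lemma cut_energy_zero a h l q : 1 < a -> a ^ 4 <= rsq q -> eval_expr (expr_cut_energy a h l) q = 0.
Proof. intros. unfold expr_cut_energy. cbn [eval_expr]. rewrite cutoff_zero by auto. ring. Qed.

Lemma dcutoff_norm2_bound a q : 1 < a -> dcutoff_norm2 a q <= 16 / (ln a ^ 2 * a ^ 2).
Proof.
  intro Ha. unfold dcutoff_norm2.
  pose proof (dcutoff_sq_bound a 1 q Ha ltac:(lia)). pose proof (dcutoff_sq_bound a 2 q Ha ltac:(lia)).
  pose proof (dcutoff_sq_bound a 3 q Ha ltac:(lia)). pose proof (dcutoff_sq_bound a 4 q Ha ltac:(lia)).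
  simpl in *. unfold Rdiv in *. lra.
Qed.

Lemma dcutoff_norm2_nonneg a q : 0 <= dcutoff_norm2 a q.
Proof. unfold dcutoff_norm2. pose proof (mul_self_nonneg (dcutoff a 1 q)). pose proof (mul_self_nonneg (dcutoff a 2 q)).
  pose proof (mul_self_nonneg (dcutoff a 3 q)). pose proof (mul_self_nonneg (dcutoff a 4 q)). lra. Qed.

Lemma dcutoff_norm2_le a q : 1 <= ln a -> dcutoff_norm2 a q <= 16 / ln a.
Proof.
  intro Hln. pose proof (gt1_of_ln_ge1 a Hln) as Ha.
  eapply Rle_trans; [apply dcutoff_norm2_bound; auto|].
  unfold Rdiv. apply Rmult_le_compat_l; [lra|]. apply Rinv_le_contravar; [lra|].
  assert (1 <= a ^ 2) by nra. nra.
Qed.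

Lemma grad_Fcurv_vanishes A phi E j k : Cinf_sol A phi -> is_MKG A phi -> static A phi -> energy0_is A phi E ->
  (forall m p, (m < 5)%nat -> c0 p = 0 -> current A phi m p = 0) ->
  (1 <= j <= 4)%nat -> (1 <= k <= 4)%nat ->
  forall x1 x2 x3 x4, grad_sq (Fcurv A j k) (mkP 0 x1 x2 x3 x4) = 0.
Proof.
  intros HS HM HT HE HJ Hj Hk x1 x2 x3 x4.
  set (h := Fcurv A j k).
  assert (Hh : Cinf h) by (apply (Cinf_Fcurv A phi); auto; lia).
  set (G := fun a l => eval_expr (expr_cut_energy a h l)).
  destruct (exists_cutoff_scale (mkP 0 x1 x2 x3 x4)) as [a [Ha Hx]].
  enough (Hw : cutoff a (mkP 0 x1 x2 x3 x4) * cutoff a (mkP 0 x1 x2 x3 x4)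
                * grad_sq h (mkP 0 x1 x2 x3 x4) / 2 = 0)
    by (rewrite (cutoff_one a _ Ha Hx) in Hw; lra).
  apply (density_vanishes_by_cutoff (fun a q => cutoff a q * cutoff a q * grad_sq h q / 2)
    (fun a q => partial 1 (G a 1%nat) q + partial 2 (G a 2%nat) q
                + partial 3 (G a 3%nat) q + partial 4 (G a 4%nat) q)
    (energy_density A phi) 64 (E + 1)); auto; try lra.
  - intros b Hb. apply continuous_cut_grad_sq; auto.
  - intros b q. pose proof (grad_sq_nonneg h q). pose proof (mul_self_nonneg (cutoff b q)).
    apply Rmult_le_pos; [apply Rmult_le_pos|]; lra.
  - intros b0 b q Hb0 Hb Hbb. pose proof (grad_sq_nonneg h q).
    pose proof (cutoff_monotone b b0 q Hb0 Hb Hbb). pose proof (cutoff_range b0 q).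
    assert (cutoff b0 q * cutoff b0 q <= cutoff b q * cutoff b q) by nra.
    unfold Rdiv. apply Rmult_le_compat_r; [lra|]. apply Rmult_le_compat_r; auto.
  - intros b M Hb HM0 HbM. apply riemann4_div_cv0; auto.
    + intros l Hl. apply C1_cut_energy; auto; lia.
    + intros l q Hl Hq. apply cut_energy_zero; auto; lra.
  - intros b q Hb Hq. pose proof (gt1_of_ln_ge1 b Hb) as Hb1.
    assert (HL : lap h q = 0) by (apply lap_Fcurv with phi; auto).
    pose proof (caccioppoli_ineq b h q Hb1 Hh HL).
    pose proof (dcutoff_norm2_le b q Hb). pose proof (dcutoff_norm2_nonneg b q).
    pose proof (Fcurv_sq_le A phi j k q Hj Hk) as HF. change (Fcurv A j k) with h in HF.
    pose proof (mul_self_nonneg (h q)).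
    assert (2 * (h q * h q) * dcutoff_norm2 b q <= 64 / ln b * energy_density A phi q).
    { apply Rle_trans with (2 * (2 * energy_density A phi q) * (16 / ln b)).
      - apply Rmult_le_compat; lra.
      - right. field. lra. }
    unfold G. lra.
  - apply riemann4_energy_bound; auto.
Qed.

Lemma Dphi_sq_zero_comp A phi p j : eval_expr (expr_Dphi_sq A phi) p = 0 -> (1 <= j <= 4)%nat ->
  Dre A phi j p = 0 /\ Dim A phi j p = 0.
Proof.
  unfold expr_Dphi_sq, sum_space. cbn [eval_expr]. intros H Hj.
  pose proof (mul_self_nonneg (Dre A phi 1 p)). pose proof (mul_self_nonneg (Dre A phi 2 p)).
  pose proof (mul_self_nonneg (Dre A phi 3 p)). pose proof (mul_self_nonneg (Dre A phi 4 p)).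
  pose proof (mul_self_nonneg (Dim A phi 1 p)). pose proof (mul_self_nonneg (Dim A phi 2 p)).
  pose proof (mul_self_nonneg (Dim A phi 3 p)). pose proof (mul_self_nonneg (Dim A phi 4 p)).
  destruct j as [|[|[|[|[|]]]]]; try lia; split; nra.
Qed.

Lemma current_vanishes A phi E : Cinf_sol A phi -> is_MKG A phi -> static A phi -> energy0_is A phi E ->
  forall m p, (m < 5)%nat -> c0 p = 0 -> current A phi m p = 0.
Proof.
  intros HS HM HT HE m p Hm Hp. destruct p as [p0 p1 p2 p3 p4]. simpl in Hp. subst p0.
  pose proof (Dphi_sq_vanishes A phi E HS HM HT HE p1 p2 p3 p4) as H1.
  unfold current.
  destruct m as [|m].
  - destruct HT as [_ HD0]. unfold Dre, Dim. rewrite HD0. simpl. ring.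
  - destruct (Dphi_sq_zero_comp A phi _ (S m) H1) as [Z1 Z2]; [lia|]. rewrite Z1, Z2. ring.
Qed.

Lemma eq_of_derivative_zero g : (forall s, derivable_pt_lim g s 0) -> forall a b, g a = g b.
Proof.
  intros H a b. destruct (Rtotal_order a b) as [Hab|[Hab|Hab]].
  - destruct (MVT_cor2 g (fun _ => 0) a b Hab) as [c [Hc _]]; [intros; apply H|]. lra.
  - subst; reflexivity.
  - destruct (MVT_cor2 g (fun _ => 0) b a Hab) as [c [Hc _]]; [intros; apply H|]. lra.
Qed.

Lemma const_of_grad_zero f : Cinf f ->
  (forall x1 x2 x3 x4 l, (1 <= l <= 4)%nat -> partial l f (mkP 0 x1 x2 x3 x4) = 0) ->
  forall x1 x2 x3 x4, f (mkP 0 x1 x2 x3 x4) = f (mkP 0 0 0 0 0).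
Proof.
  intros Hf Hg x1 x2 x3 x4.
  assert (D : forall l p, (1 <= l <= 4)%nat -> c0 p = 0 -> is_partial l f p 0).
  { intros l p Hl Hp. destruct p as [p0 p1 p2 p3 p4]. simpl in Hp; subst p0.
    pose proof (Ck_is_partial 0 f l (mkP 0 p1 p2 p3 p4) (Hf 1%nat) ltac:(lia)) as HD.
    rewrite (Hg p1 p2 p3 p4 l Hl) in HD. exact HD. }
  transitivity (f (mkP 0 0 x2 x3 x4)).
  { apply (eq_of_derivative_zero (fun s => f (mkP 0 s x2 x3 x4))). intro s.
    exact (D 1%nat (mkP 0 s x2 x3 x4) ltac:(lia) eq_refl). }
  transitivity (f (mkP 0 0 0 x3 x4)).
  { apply (eq_of_derivative_zero (fun s => f (mkP 0 0 s x3 x4))). intro s.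
    exact (D 2%nat (mkP 0 0 s x3 x4) ltac:(lia) eq_refl). }
  transitivity (f (mkP 0 0 0 0 x4)).
  { apply (eq_of_derivative_zero (fun s => f (mkP 0 0 0 s x4))). intro s.
    exact (D 3%nat (mkP 0 0 0 s x4) ltac:(lia) eq_refl). }
  apply (eq_of_derivative_zero (fun s => f (mkP 0 0 0 0 s))). intro s.
  exact (D 4%nat (mkP 0 0 0 0 s) ltac:(lia) eq_refl).
Qed.

Lemma grad_sq_zero_comp h q l : grad_sq h q = 0 -> (1 <= l <= 4)%nat -> partial l h q = 0.
Proof.
  unfold grad_sq. intros H Hl.
  pose proof (mul_self_nonneg (partial 1 h q)). pose proof (mul_self_nonneg (partial 2 h q)).
  pose proof (mul_self_nonneg (partial 3 h q)). pose proof (mul_self_nonneg (partial 4 h q)).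
  destruct l as [|[|[|[|[|]]]]]; try lia; nra.
Qed.

(* A nonzero constant F_jk would make the energy on large cubes unbounded. *)
Lemma Fcurv_vanishes A phi E j k : Cinf_sol A phi -> is_MKG A phi -> static A phi -> energy0_is A phi E ->
  (1 <= j <= 4)%nat -> (1 <= k <= 4)%nat -> forall x1 x2 x3 x4, Fcurv A j k (mkP 0 x1 x2 x3 x4) = 0.
Proof.
  intros HS HM HT HE Hj Hk.
  assert (HJ := current_vanishes A phi E HS HM HT HE).
  assert (Hc : forall x1 x2 x3 x4, Fcurv A j k (mkP 0 x1 x2 x3 x4) = Fcurv A j k (mkP 0 0 0 0 0)).
  { apply const_of_grad_zero. apply (Cinf_Fcurv A phi); auto; lia.
    intros. apply grad_sq_zero_comp; auto. apply (grad_Fcurv_vanishes A phi E); auto. }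
  set (c := Fcurv A j k (mkP 0 0 0 0 0)) in *.
  intros. rewrite Hc. destruct (Req_dec c 0) as [Z|NZ]; auto. exfalso.
  assert (Hc2 : 0 < c * c) by (assert (c * c <> 0) by (intro; apply NZ; nra); nra).
  set (M := (Rabs E + 2) / (c * c) + 1).
  assert (HQ : 0 <= (Rabs E + 2) / (c * c)).
  { unfold Rdiv. apply Rmult_le_pos; [pose proof (Rabs_pos E); lra| left; apply Rinv_0_lt_compat; lra]. }
  assert (HM0 : 1 <= M) by (unfold M; lra).
  assert (HcM : c * c * M = Rabs E + 2 + c * c) by (unfold M; field; lra).
  destruct (riemann4_energy_bound A phi E HS HT HE M ltac:(lra)) as [N1 HN1].
  specialize (HN1 N1 (le_n _)).
  assert (Lo : riemann4 (fun _ _ _ _ => c * c / 2) M N1 <= riemann4 (slice0 (energy_density A phi)) M N1).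
  { apply riemann4_le; [lra|]. intros y1 y2 y3 y4 _. unfold slice0.
    pose proof (Fcurv_sq_le A phi j k (mkP 0 y1 y2 y3 y4) Hj Hk) as HF. rewrite Hc in HF. fold c in HF. lra. }
  rewrite riemann4_const in Lo by lra.
  assert (H2M : 2 * M <= (2 * M) ^ 4).
  { assert (1 <= 2 * M) by lra. assert (1 <= (2 * M) ^ 3) by (apply pow_R1_Rle; lra).
    replace ((2 * M) ^ 4) with ((2 * M) * (2 * M) ^ 3) by ring. nra. }
  assert (c * c / 2 * (2 * M) <= c * c / 2 * (2 * M) ^ 4) by (apply Rmult_le_compat_l; lra).
  pose proof (Rle_abs E). nra.
Qed.

Lemma energy_density_vanishes A phi E : Cinf_sol A phi -> is_MKG A phi -> static A phi -> energy0_is A phi E ->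
  forall x1 x2 x3 x4, energy_density A phi (mkP 0 x1 x2 x3 x4) = 0.
Proof.
  intros HS HM HT HE x1 x2 x3 x4.
  pose proof (Dphi_sq_vanishes A phi E HS HM HT HE x1 x2 x3 x4) as H1.
  unfold energy_density. rewrite H1. unfold expr_F_sq, sum_space. cbn [eval_expr].
  rewrite !(Fcurv_vanishes A phi E) by (auto; lia). field.
Qed.

Lemma integral_R4_is_zero g E : (forall x1 x2 x3 x4, g x1 x2 x3 x4 = 0) -> integral_R4_is g E -> E = 0.
Proof.
  intros Hg [Hub Hlub].
  assert (Hz : forall Rb n, riemann4 g Rb n = 0).
  { intros Rb n. rewrite (riemann4_ext _ (fun _ _ _ _ => 0 * 1)) by (intros; rewrite Hg; ring).
    rewrite riemann4_scal. ring. }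
  assert (HI : forall I, (exists Rb, Rb > 0 /\ cube_integral g Rb I) -> I = 0).
  { intros I [Rb [_ HC]]. apply (UL_sequence (riemann4 g Rb)); [exact HC|].
    intros e He. exists 0%nat. intros. unfold R_dist. rewrite Hz, Rminus_diag, Rabs_R0. lra. }
  assert (E0 : 0 <= E).
  { apply Hub. exists 1. split; [lra|]. intros e He. exists 0%nat. intros.
    unfold R_dist. rewrite Hz, Rminus_diag, Rabs_R0. lra. }
  assert (E1 : E <= 0) by (apply Hlub; intros I HIn; rewrite (HI I HIn); lra).
  lra.
Qed.

Theorem mainTheorem12 (A : Conn) (phi : CField) :
  smooth_sol A phi ->
  is_MKG A phi ->
  (* iota_T F = 0 with T = d_t *)
  (forall nu, (nu < 5)%nat -> forall p, Fcurv A 0 nu p = 0) ->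
  (* D_T phi = 0 *)
  (forall p, Dcov A phi 0 p = (0, 0)) ->
  (* finite energy on {0} x R^4 *)
  (exists E, energy0_is A phi E) ->
  forall E, energy0_is A phi E -> E = 0.
Proof.
  (* the existence of a finite energy is subsumed by the hypothesis on E *)
  intros Hsm HM HF0 HD0 _ E HE.
  assert (HS := Cinf_sol_of_smooth_sol A phi Hsm).
  assert (HT : static A phi) by (split; auto).
  apply (integral_R4_is_zero (edens A phi)); [|exact HE].
  intros x1 x2 x3 x4. rewrite edens_static by exact HT.
  exact (energy_density_vanishes A phi E HS HM HT HE x1 x2 x3 x4).
Qed.
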